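(* Assume the stiffness matrix $\mathbf A=(a_{\ell,k})_{\ell,k\ge2}$ of the operator $L$ belongs to $\mathcal D_e(\eta_L)$ for some $\eta_L>0$, and let $v\in\mathcal A_G^{\eta,t}$ for some $\eta>0$, $t\in(0,1]$. Suppose one of the following holds: (a) $\mathbf A$ is banded with $2p+1$ nonzero diagonals (i.e. $a_{\ell,k}=0$ whenever $|\ell-k|>p$); in this case set $\bar\eta=\eta/(2p+1)^t$, $\bar t=t$; (b) $\mathbf A$ is dense, but $\eta<\eta_L$; in this case set $\bar\eta=\zeta(t)\eta$, $\bar t=\frac{t}{1+t}$, where $\zeta(t):=\big(\frac{1+t}{2}\big)^{\frac{t}{1+t}}$ for $0<t\le1$. Then $Lv\in\mathcal A_G^{\bar\eta,\bar t}$ and $\|Lv\|_{\mathcal A_G^{\bar\eta,\bar t}}\le C\|v\|_{\mathcal A_G^{\eta,t}}$ with a constant $C$ independent of $v$.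
   Context: $I=(-1,1)$, $V=H^1_0(I)$, $L_k$ the Legendre polynomial of degree $k$ with $L_k(1)=1$, and $\eta_k=\frac{1}{\sqrt{4k-2}}(L_{k-2}-L_k)$, $k\in\mathbb N_2:=\{k\in\mathbb N:k\ge2\}$, the Babuška–Shen basis, orthonormal in $V$ for $(u,v)\mapsto\int_I u'v'$. Each $v\in V$ is $v=\sum_{k\ge2}\hat v_k\eta_k$ with $\|v\|:=\|v'\|_{L^2}=(\sum|\hat v_k|^2)^{1/2}$; each $f\in H^{-1}(I)$ has coefficients $\hat f_k=\langle f,\eta_k\rangle$ and $\|f\|:=(\sum_{k\ge2}|\hat f_k|^2)^{1/2}$. $L$ is the operator $Lw=-(\nu w')'+\sigma w$ with smooth real coefficients, $0<\nu_*\le\nu\le\nu^*$, $0\le\sigma\le\sigma^*$, associated with the bilinear form $a(w,v)=\int_I\nu w'v'+\int_I\sigma wv$ on $V$; its stiffness matrix is $a_{\ell,k}=a(\eta_k,\eta_\ell)$, so the coefficient vector of $Lv$ is $\mathbf A\mathbf v$. A matrix belongs to $\mathcal D_e(\eta_L)$ if there is $c_L>0$ with $|a_{m,n}|\le c_Le^{-\eta_L|m-n|}$ for all $m,n\ge2$. For a coefficient sequence (of a function in $V$ or a functional in $H^{-1}$), the best $N$-term approximation error is $E_N=\inf_{\Lambda\subset\mathbb N_2,|\Lambda|=N}(\sum_{k\notin\Lambda}|\hat v_k|^2)^{1/2}$, and $\mathcal A_G^{\eta,t}$ is the set of such $v$ with $\|v\|_{\mathcal A_G^{\eta,t}}:=\sup_{N\ge0}E_N(v)e^{\eta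 N^t}<\infty$. *)

From Stdlib Require Import Reals List.
From Coquelicot Require Import Coquelicot.
Open Scope R_scope.

(* Convention: sequences indexed by k in N_2 = {2,3,...} are stored shifted,
   i.e. a sequence c : nat -> R represents (c_k)_{k>=2} via c j = c_{j+2}.
   Index differences |m-n| are invariant under this shift. *)

(* Legendre polynomials: leg_pair n = (L_n, L_{n+1}), with L_0 = 1, L_1 = x,
   (k+1) L_{k+1} = (2k+1) x L_k - k L_{k-1}  (normalized by L_k(1) = 1). *)
Fixpoint leg_pair (n : nat) : (R -> R) * (R -> R) :=
  match n with
  | O => (fun _ => 1, fun x => x)
  | S m => let (p, q) := leg_pair m in
           (q, fun x => ((2 * INR m + 3) * x * q x - (INR m + 1) * p x) / (INR m + 2))
  end.

Definition legendre (n : nat) : R -> R := fst (leg_pair n).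

(* Babuska-Shen basis, shifted: bs j = eta_{j+2}
   = (L_j - L_{j+2}) / sqrt(4 (j+2) - 2). *)
Definition bs (j : nat) : R -> R :=
  fun x => (legendre j x - legendre (j + 2) x) / sqrt (4 * INR (j + 2) - 2).

(* Stiffness matrix (shifted): stiff nu sigma i j = a_{i+2, j+2}
   = a(eta_{j+2}, eta_{i+2}) = int_{-1}^1 nu eta_k' eta_l' + sigma eta_k eta_l. *)
Definition stiff (nu sigma : R -> R) (i j : nat) : R :=
  RInt (fun x => nu x * Derive (bs j) x * Derive (bs i) x
                 + sigma x * bs j x * bs i x) (-1) 1.

Definition smooth (f : R -> R) : Prop := forall (n : nat) (x : R), ex_derive_n f n x.

Definition in_De (etaL : R) (A : nat -> nat -> R) : Prop :=
  exists cL : R, 0 < cL /\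
    forall m n : nat, Rabs (A m n) <= cL * exp (- etaL * Rabs (INR m - INR n)).

Definition banded (p : nat) (A : nat -> nat -> R) : Prop :=
  forall m n : nat, INR p < Rabs (INR m - INR n) -> A m n = 0.

(* Coefficient vector of L v: (A v)_l = sum_k a_{l,k} v_k. *)
Definition apply_mat (A : nat -> nat -> R) (c : nat -> R) : nat -> R :=
  fun i => Series (fun j => A i j * c j).

(* Real power N^t with 0^t = 0 for t > 0. *)
Definition npow (N : nat) (t : R) : R :=
  match N with O => 0 | S _ => Rpower (INR N) t end.

Definition tail_sq (c : nat -> R) (Lam : list nat) : R :=
  Series (fun j => if existsb (Nat.eqb j) Lam then 0 else (c j) ^ 2).

Definition bestN (c : nat -> R) (N : nat) : Rbar :=
  Glb_Rbar (fun r => exists Lam : list nat,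
              NoDup Lam /\ length Lam = N /\ r = sqrt (tail_sq c Lam)).

Definition AG_norm (eta t : R) (c : nat -> R) : Rbar :=
  Lub_Rbar (fun r => exists N : nat, r = Rbar_mult (bestN c N) (exp (eta * npow N t))).

Definition in_AG (eta t : R) (c : nat -> R) : Prop :=
  ex_series (fun j => (c j) ^ 2) /\ is_finite (AG_norm eta t c).

Definition zeta (t : R) : R := Rpower ((1 + t) / 2) (t / (1 + t)).

(* Both bounds compare best N-term approximations of [A v] and of [v].  Rows of [A v]
   that are far from an index set [Lam] only see the coefficients of [v] outside [Lam]
   (up to the decay of [A]), and the Schur test bounds their l2 norm.

   (a) For a band of half-width [p], the [(2p+1)N] rows within distance [p] of a best
   [N]-term set of [v] leave a tail of [A v] of size [O(E_N(v))].

   (b) For dense [A], fix a level [X], let [tau = ||v|| e^(-eta X)] ([||v||] the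
   [A_G^(eta,t)] norm) and give every coefficient of [v] above [tau] a ball of radius
   [r] when it exceeds [r] of the levels [tau e^(mid_rate k)].  As [v] lies in
   [A_G^(eta,t)], at most [O(Y^(1/t))] coefficients exceed [||v|| e^(-eta Y)], so the
   balls contain [O(X^(1+1/t))] indices in total, while the rows outside them see the
   small coefficients and an exponentially damped contribution of the large ones: the
   tail is [O(X^(1/(2t)) e^(-eta X))].
   Taking [X] of order [N^(t/(1+t))] gives the rate [zeta t * eta]. *)

From Stdlib Require Import Reals List Lra Lia Psatz ZArith.
From Coquelicot Require Import Coquelicot.
Open Scope R_scope.

Definition lsum (f : nat -> R) (l : list nat) : R :=
  fold_right (fun j acc => f j + acc) 0 l.

Lemma lsum_cons f a l : lsum f (a :: l) = f a + lsum f l.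
Proof. reflexivity. Qed.

Lemma lsum_nil f : lsum f nil = 0.
Proof. reflexivity. Qed.

Lemma lsum_app f l1 l2 : lsum f (l1 ++ l2) = lsum f l1 + lsum f l2.
Proof. induction l1; simpl; [lra|rewrite IHl1; lra]. Qed.

Lemma lsum_le f g l : (forall j, In j l -> f j <= g j) -> lsum f l <= lsum g l.
Proof.
 induction l as [|a l IH]; simpl; intros H; [lra|].
 assert (f a <= g a) by auto. assert (lsum f l <= lsum g l) by auto. lra.
Qed.

Lemma lsum_nonneg f l : (forall j, In j l -> 0 <= f j) -> 0 <= lsum f l.
Proof.
 induction l as [|a l IH]; simpl; intros H; [lra|].
 assert (0 <= f a) by auto. assert (0 <= lsum f l) by auto. lra.
Qed.

Lemma lsum_scal c f l : lsum (fun j => c * f j) l = c * lsum f l.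
Proof. induction l; simpl; [ring|rewrite IHl; ring]. Qed.

Lemma lsum_plus f g l : lsum (fun j => f j + g j) l = lsum f l + lsum g l.
Proof. induction l; simpl; [ring|rewrite IHl; ring]. Qed.

Lemma lsum_ext f g l : (forall j, In j l -> f j = g j) -> lsum f l = lsum g l.
Proof. induction l; simpl; intros H; auto. rewrite H, IHl; auto. Qed.

Lemma lsum_const c l : lsum (fun _ => c) l = c * INR (length l).
Proof. induction l; simpl length; [simpl; ring|]. rewrite S_INR. simpl. rewrite IHl. ring. Qed.

Lemma lsum_seq_S f n : lsum f (seq 0 (S n)) = lsum f (seq 0 n) + f n.
Proof. rewrite seq_S, lsum_app. simpl. ring. Qed.

Lemma lsum_swap (F : nat -> nat -> R) l1 l2 :
  lsum (fun j => lsum (fun k => F j k) l2) l1 = lsum (fun k => lsum (fun j => F j k) l1) l2.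
Proof.
 induction l1 as [|a l1 IH].
 - rewrite lsum_nil. symmetry. rewrite <- (Rmult_0_l (INR (length l2))), <- lsum_const.
   apply lsum_ext. reflexivity.
 - rewrite lsum_cons, IH, <- lsum_plus. apply lsum_ext. reflexivity.
Qed.

Lemma lsum_remove f a l : NoDup l -> In a l ->
  lsum f l = f a + lsum f (remove Nat.eq_dec a l).
Proof.
 induction l as [|b l IH]; intros Hnd Hin; [destruct Hin|].
 inversion Hnd; subst. simpl. destruct (Nat.eq_dec a b).
 - subst. rewrite notin_remove; auto.
 - simpl. destruct Hin as [->|Hin]; [congruence|]. rewrite (IH H2 Hin). ring.
Qed.

Lemma NoDup_remove_nat a l : NoDup l -> NoDup (remove Nat.eq_dec a l).
Proof.
 induction l as [|b l IH]; intros H; simpl; [constructor|]. inversion H; subst.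
 destruct (Nat.eq_dec a b); auto. constructor; auto.
 intro Hin. apply in_remove in Hin. tauto.
Qed.

Lemma lsum_incl f l1 l2 : (forall j, 0 <= f j) -> NoDup l1 -> NoDup l2 -> incl l1 l2 ->
  lsum f l1 <= lsum f l2.
Proof.
 intros Hp. revert l2. induction l1 as [|a l1 IH]; intros l2 H1 H2 Hi.
 - simpl. apply lsum_nonneg. auto.
 - inversion H1; subst. simpl.
   rewrite (lsum_remove f a l2 H2 (Hi a (or_introl eq_refl))).
   assert (lsum f l1 <= lsum f (remove Nat.eq_dec a l2)); [|lra].
   apply IH; auto using NoDup_remove_nat.
   intros x Hx. apply in_in_remove; [intros ->; tauto|]. apply Hi. right; auto.
Qed.

Lemma incl_seq_max l : exists n, incl l (seq 0 n).
Proof.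
 induction l as [|a l [n Hn]]; [exists 0%nat; intros x []|].
 exists (S (Nat.max a n)). intros x [->|Hx]; apply in_seq; split; try lia.
 apply Hn in Hx. apply in_seq in Hx. lia.
Qed.

Lemma sum_n_lsum f n : sum_n f n = lsum f (seq 0 (S n)).
Proof.
 induction n.
 - rewrite sum_O. simpl. lra.
 - rewrite sum_Sn, IHn, (lsum_seq_S f (S n)). reflexivity.
Qed.

Lemma sum_n_nondecr f : (forall n, 0 <= f n) -> forall n, sum_n f n <= sum_n f (S n).
Proof. intros Hp n. rewrite sum_Sn. specialize (Hp (S n)). simpl. unfold plus; simpl. lra. Qed.

Lemma ex_Series_le_of_lsum f B : (forall n, 0 <= f n) -> (forall n, lsum f (seq 0 n) <= B) ->
  ex_series f /\ Series f <= B.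
Proof.
 intros Hp HB.
 assert (Hb : forall n, sum_n f n <= B) by (intro n; rewrite sum_n_lsum; auto).
 destruct (ex_finite_lim_seq_incr _ _ (sum_n_nondecr f Hp) Hb) as [l Hl].
 split; [exists l; exact Hl|].
 rewrite (is_series_unique f l Hl).
 exact (is_lim_seq_le _ (fun _ => B) l B Hb Hl (is_lim_seq_const B)).
Qed.

Lemma lsum_seq_le_Series f n : (forall n, 0 <= f n) -> ex_series f -> lsum f (seq 0 n) <= Series f.
Proof.
 intros Hp [l Hl]. rewrite (is_series_unique _ _ Hl).
 pose proof (is_lim_seq_incr_compare _ _ Hl (sum_n_nondecr f Hp)) as Hle.
 destruct n as [|n].
 - specialize (Hle 0%nat). rewrite sum_O in Hle. specialize (Hp 0%nat). simpl. lra.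
 - rewrite <- sum_n_lsum. apply Hle.
Qed.

Lemma Series_nonneg f : (forall n, 0 <= f n) -> ex_series f -> 0 <= Series f.
Proof. intros Hp He. exact (lsum_seq_le_Series f 0 Hp He). Qed.

Lemma lsum_NoDup_le_Series f l : (forall n, 0 <= f n) -> ex_series f -> NoDup l ->
  lsum f l <= Series f.
Proof.
 intros Hp He Hnd. destruct (incl_seq_max l) as [n Hn].
 apply Rle_trans with (lsum f (seq 0 n)).
 - apply lsum_incl; auto using seq_NoDup.
 - apply lsum_seq_le_Series; auto.
Qed.

Lemma ex_series_nonneg_le f g : (forall n, 0 <= f n <= g n) -> ex_series g -> ex_series f.
Proof. intros H Hg. apply (ex_series_le f g); auto. intro n. rewrite Rabs_pos_eq; apply H. Qed.

Lemma Series_dominated f g : (forall j, Rabs (f j) <= g j) -> ex_series g ->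
  ex_series f /\ Rabs (Series f) <= Series g.
Proof.
 intros H Hg.
 assert (Ha : ex_series (fun j => Rabs (f j))).
 { apply (ex_series_nonneg_le _ g); auto. intro; split; [apply Rabs_pos|auto]. }
 split; [apply ex_series_Rabs; auto|].
 eapply Rle_trans; [apply Series_Rabs; auto|]. apply Series_le; auto.
 intro; split; [apply Rabs_pos|auto].
Qed.

Lemma is_series_zero : is_series (fun _ : nat => 0) 0.
Proof.
 assert (H : is_lim_seq (sum_n (fun _ => 0)) 0).
 { eapply is_lim_seq_ext; [|apply is_lim_seq_const].
   intro n. rewrite sum_n_lsum, lsum_const. ring. }
 exact H.
Qed.

Lemma Series_lsum (F : nat -> nat -> R) l : (forall i, ex_series (F i)) ->
  ex_series (fun j => lsum (fun i => F i j) l) /\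
  lsum (fun i => Series (F i)) l = Series (fun j => lsum (fun i => F i j) l).
Proof.
 intros HF. induction l as [|a l [He Heq]].
 - rewrite lsum_nil. split; [exists 0; apply is_series_zero|].
   symmetry. apply is_series_unique, is_series_zero.
 - rewrite lsum_cons. split; [apply (ex_series_plus (F a) _ (HF a) He)|].
   rewrite Heq, <- Series_plus; auto.
Qed.

(** * Schur test *)

Lemma lsum_cauchy_schwarz (b z : nat -> R) l : (forall j, 0 <= b j) ->
  (lsum (fun j => b j * z j) l) ^ 2 <= lsum b l * lsum (fun j => b j * z j ^ 2) l.
Proof.
 intros Hb. set (A := lsum b l). set (B := lsum (fun j => b j * z j) l).
 set (C := lsum (fun j => b j * z j ^ 2) l).
 assert (Hq : forall lam, 0 <= C - 2 * lam * B + lam ^ 2 * A).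
 { intro lam.
   assert (E : C - 2 * lam * B + lam ^ 2 * A = lsum (fun j => b j * (z j - lam) ^ 2) l).
   { unfold A, B, C. clear A B C.
     induction l; rewrite ?lsum_nil, ?lsum_cons; [ring|]. rewrite <- IHl. ring. }
   rewrite E. apply lsum_nonneg. intros j _. apply Rmult_le_pos; [auto|apply pow2_ge_0]. }
 assert (HA : 0 <= A) by (apply lsum_nonneg; auto).
 destruct (Req_dec A 0) as [H0|H0].
 - assert (HB : B = 0).
   { destruct (Req_dec B 0) as [|HB]; auto. exfalso.
     specialize (Hq ((C + 1) / (2 * B))). rewrite H0 in Hq.
     replace (C - 2 * ((C + 1) / (2 * B)) * B + ((C + 1) / (2 * B)) ^ 2 * 0) with (-1) in Hq
       by (field; auto). lra. }
   rewrite HB, H0. nra.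
 - specialize (Hq (B / A)).
   replace (C - 2 * (B / A) * B + (B / A) ^ 2 * A) with ((A * C - B ^ 2) / A) in Hq
     by (field; auto).
   assert (0 <= A * C - B ^ 2).
   { apply (Rmult_le_reg_r (/ A)); [apply Rinv_0_lt_compat; lra|]. lra. }
   lra.
Qed.

Lemma Rle_sqrt_of_sqr_le x W : 0 <= x -> x ^ 2 <= W -> x <= sqrt W.
Proof. intros H1 H2. rewrite <- (sqrt_pow2 x H1). apply sqrt_le_1_alt. exact H2. Qed.

Section Schur.
Variables (b : nat -> nat -> R) (z : nat -> R) (alpha beta : R).
Hypothesis b_nonneg : forall i j, 0 <= b i j.
Hypothesis z_nonneg : forall j, 0 <= z j.
Hypothesis row_sum : forall i m, lsum (b i) (seq 0 m) <= alpha.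
Hypothesis col_sum : forall j n, lsum (fun i => b i j) (seq 0 n) <= beta.
Hypothesis z_sq : ex_series (fun j => z j ^ 2).

Let Z := Series (fun j => z j ^ 2).

Lemma schur_entry_le i j : b i j <= alpha.
Proof.
 pose proof (row_sum i (S j)) as H. rewrite lsum_seq_S in H.
 assert (0 <= lsum (b i) (seq 0 j)) by (apply lsum_nonneg; auto). lra.
Qed.

Lemma schur_alpha_nonneg : 0 <= alpha.
Proof. pose proof (schur_entry_le 0 0). pose proof (b_nonneg 0 0). lra. Qed.

Lemma ex_series_schur_weighted i : ex_series (fun j => b i j * z j ^ 2).
Proof.
 apply (ex_series_nonneg_le _ (fun j => alpha * z j ^ 2)).
 - intro j. pose proof (b_nonneg i j). pose proof (schur_entry_le i j).
   pose proof (pow2_ge_0 (z j)). split; [apply Rmult_le_pos|apply Rmult_le_compat_r]; lra.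
 - exact (ex_series_scal_l alpha _ z_sq).
Qed.

Lemma schur_row i : ex_series (fun j => b i j * z j) /\
  (Series (fun j => b i j * z j)) ^ 2 <= alpha * Series (fun j => b i j * z j ^ 2).
Proof.
 set (W := alpha * Series (fun j => b i j * z j ^ 2)).
 assert (Hbz : forall j, 0 <= b i j * z j) by (intro; apply Rmult_le_pos; auto).
 assert (Hbz2 : forall j, 0 <= b i j * z j ^ 2)
   by (intro; apply Rmult_le_pos; auto; apply pow2_ge_0).
 assert (HW : 0 <= W).
 { apply Rmult_le_pos; [apply schur_alpha_nonneg|].
   apply Series_nonneg; auto using ex_series_schur_weighted. }
 assert (Hpart : forall m, (lsum (fun j => b i j * z j) (seq 0 m)) ^ 2 <= W).
 { intro m. eapply Rle_trans; [apply lsum_cauchy_schwarz; auto|].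
   apply Rmult_le_compat; try (apply lsum_nonneg; auto); [apply row_sum|].
   apply lsum_seq_le_Series; auto using ex_series_schur_weighted. }
 destruct (ex_Series_le_of_lsum (fun j => b i j * z j) (sqrt W)) as [He Hle]; auto.
 { intro m. apply Rle_sqrt_of_sqr_le; auto. apply lsum_nonneg; auto. }
 split; auto.
 rewrite <- (pow2_sqrt W HW). apply pow_incr. split; auto. apply Series_nonneg; auto.
Qed.

Lemma schur_test n :
  lsum (fun i => (Series (fun j => b i j * z j)) ^ 2) (seq 0 n) <= alpha * beta * Z.
Proof.
 eapply Rle_trans; [apply (lsum_le _ _ _ (fun i _ => proj2 (schur_row i)))|].
 rewrite lsum_scal.
 destruct (Series_lsum (fun i j => b i j * z j ^ 2) (seq 0 n) ex_series_schur_weighted)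
   as [_ ->].
 rewrite Rmult_assoc. apply Rmult_le_compat_l; [apply schur_alpha_nonneg|].
 unfold Z. rewrite <- Series_scal_l. apply Series_le; [|exact (ex_series_scal_l beta _ z_sq)].
 intro j. split.
 - apply lsum_nonneg. intros; apply Rmult_le_pos; auto. apply pow2_ge_0.
 - rewrite (lsum_ext _ (fun i => z j ^ 2 * b i j)) by (intros; ring).
   rewrite lsum_scal, Rmult_comm. apply Rmult_le_compat_r; [apply pow2_ge_0|apply col_sum].
Qed.

End Schur.

Lemma exp_le_compat x y : x <= y -> exp x <= exp y.
Proof. intros [H|H]; [left; apply exp_increasing; auto|subst; lra]. Qed.

Lemma exp_neg_lt_1 a : 0 < a -> exp (- a) < 1.
Proof. intros Ha. rewrite <- exp_0. apply exp_increasing. lra. Qed.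

Lemma exp_mult_INR a d : exp (- a * INR d) = exp (- a) ^ d.
Proof.
 induction d; [simpl; rewrite Rmult_0_r; apply exp_0|].
 rewrite S_INR, <- tech_pow_Rmult, <- IHd, <- exp_plus. f_equal. ring.
Qed.

Lemma exp_dist_pow a i j : exp (- a * Rabs (INR i - INR j)) =
  exp (- a) ^ (if Nat.leb j i then (i - j)%nat else (j - i)%nat).
Proof.
 rewrite <- exp_mult_INR. do 2 f_equal.
 destruct (Nat.leb_spec j i) as [H|H].
 - rewrite minus_INR by auto. rewrite Rabs_right; [ring|]. apply le_INR in H. lra.
 - rewrite minus_INR by lia. rewrite Rabs_left; [ring|]. apply lt_INR in H. lra.
Qed.

Definition exp_dist_const (a : R) := (1 + exp (- a)) / (1 - exp (- a)).

Lemma exp_dist_const_pos a : 0 < a -> 0 < exp_dist_const a.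
Proof.
 intros Ha. pose proof (exp_neg_lt_1 a Ha). pose proof (exp_pos (- a)).
 apply Rdiv_lt_0_compat; lra.
Qed.

(* [G m] is the closed form of the partial sum of the two geometric series on either
   side of [i]. *)
Lemma lsum_exp_dist_le a i m : 0 < a ->
  lsum (fun j => exp (- a * Rabs (INR i - INR j))) (seq 0 m) <= exp_dist_const a.
Proof.
 intros Ha. unfold exp_dist_const. set (q := exp (- a)).
 assert (Hq0 : 0 < q) by apply exp_pos.
 assert (Hq1 : q < 1) by (apply exp_neg_lt_1; auto).
 assert (Hqp : forall n, 0 < q ^ n) by (intro; apply pow_lt; auto).
 assert (Hqle : forall n, q ^ n <= 1) by (intro n; rewrite <- (pow1 n); apply pow_incr; lra).
 assert (Hinv : 0 < / (1 - q)) by (apply Rinv_0_lt_compat; lra).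
 set (G := fun m => if Nat.leb m i then q ^ (i - m + 1) / (1 - q)
                    else (1 + q - q ^ (m - i)) / (1 - q)).
 assert (HG : forall k, lsum (fun j => exp (- a * Rabs (INR i - INR j))) (seq 0 k) <= G k).
 { clear m. intro m; induction m as [|m IHm].
   - unfold G. simpl. apply Rmult_le_pos; [left; apply Hqp|lra].
   - rewrite lsum_seq_S, exp_dist_pow. fold q.
     apply (Rle_trans _ _ _ (Rplus_le_compat_r _ _ _ IHm)). unfold G.
     destruct (Nat.leb_spec m i); destruct (Nat.leb_spec (S m) i); try lia.
     + replace (i - m + 1)%nat with (S (i - S m + 1)) by lia.
       replace (i - m)%nat with (i - S m + 1)%nat by lia.
       apply Req_le. simpl. field. lra.
     + assert (m = i) by lia. subst.
       replace (i - i + 1)%nat with 1%nat by lia. replace (i - i)%nat with 0%nat by lia.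
       replace (S i - i)%nat with 1%nat by lia.
       apply Req_le. field. lra.
     + replace (S m - i)%nat with (S (m - i)) by lia.
       apply Req_le. simpl. field. lra. }
 eapply Rle_trans; [apply HG|]. unfold G.
 destruct (Nat.leb m i); apply Rmult_le_compat_r; try lra.
 - pose proof (Hqle (i - m + 1)%nat). lra.
 - pose proof (Hqp (m - i)%nat). lra.
Qed.

Lemma lsum_exp_dist_le_col a j n : 0 < a ->
  lsum (fun i => exp (- a * Rabs (INR i - INR j))) (seq 0 n) <= exp_dist_const a.
Proof.
 intros Ha. rewrite (lsum_ext _ (fun i => exp (- a * Rabs (INR j - INR i)))).
 - apply lsum_exp_dist_le; auto.
 - intros. rewrite Rabs_minus_sym. reflexivity.
Qed.

(** * Tails and best N-term approximation *)

Lemma existsb_eqb_In j l : existsb (Nat.eqb j) l = true <-> In j l.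
Proof.
 rewrite existsb_exists. split.
 - intros [x [Hx Hj]]. apply Nat.eqb_eq in Hj. subst; auto.
 - intros H. exists j. split; auto. apply Nat.eqb_refl.
Qed.

(* [tail_sq c Lam] is by definition the [Series] of [off_sq c Lam]. *)
Definition off_sq (c : nat -> R) (Lam : list nat) (j : nat) : R :=
  if existsb (Nat.eqb j) Lam then 0 else c j ^ 2.

Lemma off_sq_nonneg c Lam j : 0 <= off_sq c Lam j.
Proof. unfold off_sq. destruct existsb; [lra|apply pow2_ge_0]. Qed.

Lemma off_sq_le c Lam j : off_sq c Lam j <= c j ^ 2.
Proof. unfold off_sq. destruct existsb; [apply pow2_ge_0|lra]. Qed.

Lemma ex_series_off_sq c Lam : ex_series (fun j => c j ^ 2) -> ex_series (off_sq c Lam).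
Proof.
 apply ex_series_nonneg_le. intro j. split; [apply off_sq_nonneg|apply off_sq_le].
Qed.

Lemma tail_sq_nonneg c Lam : ex_series (fun j => c j ^ 2) -> 0 <= tail_sq c Lam.
Proof. intros H. apply Series_nonneg; [apply off_sq_nonneg|apply ex_series_off_sq; auto]. Qed.

Lemma tail_sq_antimono c L1 L2 : ex_series (fun j => c j ^ 2) -> incl L1 L2 ->
  tail_sq c L2 <= tail_sq c L1.
Proof.
 intros H Hi. apply Series_le; [|apply ex_series_off_sq; auto].
 intro j. split; [apply off_sq_nonneg|]. fold (off_sq c L2 j) (off_sq c L1 j). unfold off_sq.
 destruct (existsb (Nat.eqb j) L2) eqn:E2.
 - destruct (existsb (Nat.eqb j) L1); [lra|apply pow2_ge_0].
 - destruct (existsb (Nat.eqb j) L1) eqn:E1; [|lra].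
   apply existsb_eqb_In, Hi, existsb_eqb_In in E1. congruence.
Qed.

Lemma tail_sq_le_of_lsum c Lam B : (forall n, lsum (off_sq c Lam) (seq 0 n) <= B) ->
  ex_series (off_sq c Lam) /\ tail_sq c Lam <= B.
Proof. intros H. apply ex_Series_le_of_lsum; auto. apply off_sq_nonneg. Qed.

Lemma bestN_spec c N : is_finite (bestN c N) /\ 0 <= real (bestN c N) /\
  (forall Lam, NoDup Lam -> length Lam = N -> real (bestN c N) <= sqrt (tail_sq c Lam)).
Proof.
 unfold bestN.
 set (E := fun r => exists Lam, NoDup Lam /\ length Lam = N /\ r = sqrt (tail_sq c Lam)).
 destruct (Glb_Rbar_correct E) as [Hlb Hgl].
 assert (H0 : Rbar_le 0 (Glb_Rbar E)) by (apply Hgl; intros x [Lam [_ [_ ->]]]; apply sqrt_pos).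
 assert (Hx : E (sqrt (tail_sq c (seq 0 N)))).
 { exists (seq 0 N). auto using seq_NoDup, length_seq. }
 pose proof (Hlb _ Hx) as H1.
 destruct (Glb_Rbar E) as [g| |]; simpl in H0, H1; try contradiction.
 repeat split; auto. intros Lam Hn Hl. apply Hlb. exists Lam. auto.
Qed.

Lemma bestN_approx c N eps : 0 < eps -> exists Lam, NoDup Lam /\ length Lam = N /\
  sqrt (tail_sq c Lam) < real (bestN c N) + eps.
Proof.
 intros He. destruct (bestN_spec c N) as [Hf _]. revert Hf. unfold bestN.
 set (E := fun r => exists Lam, NoDup Lam /\ length Lam = N /\ r = sqrt (tail_sq c Lam)).
 destruct (Glb_Rbar_correct E) as [_ Hgl].
 destruct (Glb_Rbar E) as [g| |]; intros Hf; try discriminate Hf. simpl.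
 apply Classical_Pred_Type.not_all_not_ex. intro Hn.
 enough (Rbar_le (g + eps) g) by (simpl in *; lra).
 apply Hgl. intros x [Lam [H1 [H2 ->]]]. simpl.
 destruct (Rle_dec (g + eps) (sqrt (tail_sq c Lam))) as [|Hlt]; auto.
 exfalso. apply (Hn Lam). repeat split; auto. lra.
Qed.

Lemma bestN_mult c N (x : R) : Rbar_mult (bestN c N) x = Finite (real (bestN c N) * x).
Proof. destruct (bestN_spec c N) as [Hf _]. destruct (bestN c N); try discriminate. reflexivity. Qed.

Lemma bestN_exp_le_AG_norm eta t c : is_finite (AG_norm eta t c) -> forall N,
  real (bestN c N) * exp (eta * npow N t) <= real (AG_norm eta t c).
Proof.
 unfold AG_norm. intros Hf N.
 destruct (Lub_Rbar_correct (fun r => exists N, r = Rbar_mult (bestN c N) (exp (eta * npow N t))))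
   as [Hub _].
 assert (Hx : Rbar_le (real (bestN c N) * exp (eta * npow N t))
   (Lub_Rbar (fun r => exists N, r = Rbar_mult (bestN c N) (exp (eta * npow N t))))).
 { apply Hub. exists N. rewrite bestN_mult. reflexivity. }
 revert Hf Hx.
 destruct Lub_Rbar; easy.
Qed.

Lemma AG_norm_le eta t c B : (forall N, real (bestN c N) * exp (eta * npow N t) <= B) ->
  is_finite (AG_norm eta t c) /\ real (AG_norm eta t c) <= B.
Proof.
 unfold AG_norm. intros HB.
 destruct (Lub_Rbar_correct (fun r => exists N, r = Rbar_mult (bestN c N) (exp (eta * npow N t))))
   as [Hub Hl].
 assert (H1 : Rbar_le (Lub_Rbar (fun r => exists N, r = Rbar_mult (bestN c N) (exp (eta * npow N t)))) B).
 { apply Hl. intros x [N ->]. rewrite bestN_mult. apply HB. }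
 assert (Hx : Rbar_le (real (bestN c 0) * exp (eta * npow 0 t))
   (Lub_Rbar (fun r => exists N, r = Rbar_mult (bestN c N) (exp (eta * npow N t))))).
 { apply Hub. exists 0%nat. rewrite bestN_mult. reflexivity. }
 revert H1 Hx.
 destruct Lub_Rbar; simpl; intros; try contradiction. split; [reflexivity|auto].
Qed.

Section AG_facts.
Variables (eta t : R) (v : nat -> R).
Hypothesis Hv : in_AG eta t v.

Lemma ex_series_sq_AG : ex_series (fun j => v j ^ 2).
Proof. apply Hv. Qed.

Lemma AG_norm_nonneg : 0 <= real (AG_norm eta t v).
Proof.
 eapply Rle_trans; [|apply (bestN_exp_le_AG_norm eta t v (proj2 Hv) 0)].
 apply Rmult_le_pos; [apply bestN_spec|left; apply exp_pos].
Qed.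

Lemma bestN_le_AG_norm N : real (bestN v N) <= real (AG_norm eta t v) * exp (- eta * npow N t).
Proof.
 pose proof (bestN_exp_le_AG_norm eta t v (proj2 Hv) N).
 pose proof (exp_pos (eta * npow N t)).
 replace (- eta * npow N t) with (- (eta * npow N t)) by ring. rewrite exp_Ropp.
 apply (Rmult_le_reg_r (exp (eta * npow N t))); auto.
 rewrite Rmult_assoc, Rinv_l by lra. lra.
Qed.

Lemma Series_sq_le_AG_norm : Series (fun j => v j ^ 2) <= (real (AG_norm eta t v)) ^ 2.
Proof.
 set (M := real (AG_norm eta t v)).
 assert (HM : 0 <= M) by apply AG_norm_nonneg.
 assert (Hb : real (bestN v 0) <= M).
 { pose proof (bestN_le_AG_norm 0) as H. simpl npow in H.
   rewrite Rmult_0_r, exp_0, Rmult_1_r in H. exact H. }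
 assert (Hs : sqrt (Series (fun j => v j ^ 2)) <= M).
 { apply Rle_plus_epsilon. intros e He.
   destruct (bestN_approx v 0 e He) as [[|] [_ [Hl Hlt]]]; [|discriminate].
   change (tail_sq v nil) with (Series (fun j => v j ^ 2)) in Hlt. lra. }
 assert (0 <= Series (fun j => v j ^ 2))
   by (apply Series_nonneg; [intro; apply pow2_ge_0|apply ex_series_sq_AG]).
 rewrite <- (sqrt_sqrt (Series (fun j => v j ^ 2))) by auto.
 replace (M ^ 2) with (M * M) by ring. apply Rmult_le_compat; auto; apply sqrt_pos.
Qed.

Lemma Rabs_coef_le_AG_norm j : Rabs (v j) <= real (AG_norm eta t v).
Proof.
 assert (Hv2 : forall j, 0 <= v j ^ 2) by (intro; apply pow2_ge_0).
 pose proof (lsum_seq_le_Series _ (S j) Hv2 ex_series_sq_AG) as H. rewrite lsum_seq_S in H.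
 assert (0 <= lsum (fun j => v j ^ 2) (seq 0 j)) by (apply lsum_nonneg; auto).
 pose proof Series_sq_le_AG_norm.
 rewrite <- (Rabs_pos_eq (real (AG_norm eta t v))) by apply AG_norm_nonneg.
 apply Rsqr_le_abs_0. unfold Rsqr. simpl in *. lra.
Qed.

End AG_facts.

Lemma tail_sq_apply_mat_le (A : nat -> nat -> R) (v : nat -> R) (Lam : list nat)
  (b1 b2 : nat -> nat -> R) (z1 z2 : nat -> R) a1 be1 a2 be2 :
  (forall i j, 0 <= b1 i j) -> (forall j, 0 <= z1 j) ->
  (forall i m, lsum (b1 i) (seq 0 m) <= a1) ->
  (forall j n, lsum (fun i => b1 i j) (seq 0 n) <= be1) ->
  ex_series (fun j => z1 j ^ 2) ->
  (forall i j, 0 <= b2 i j) -> (forall j, 0 <= z2 j) ->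
  (forall i m, lsum (b2 i) (seq 0 m) <= a2) ->
  (forall j n, lsum (fun i => b2 i j) (seq 0 n) <= be2) ->
  ex_series (fun j => z2 j ^ 2) ->
  (forall i, ~ In i Lam -> forall j, Rabs (A i j * v j) <= b1 i j * z1 j + b2 i j * z2 j) ->
  ex_series (off_sq (apply_mat A v) Lam) /\
  tail_sq (apply_mat A v) Lam <= 2 * (a1 * be1 * Series (fun j => z1 j ^ 2))
                                + 2 * (a2 * be2 * Series (fun j => z2 j ^ 2)).
Proof.
 intros Hb1 Hz1 Hr1 Hc1 Hs1 Hb2 Hz2 Hr2 Hc2 Hs2 Hdom.
 set (y1 := fun i => Series (fun j => b1 i j * z1 j)).
 set (y2 := fun i => Series (fun j => b2 i j * z2 j)).
 apply tail_sq_le_of_lsum. intro n.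
 apply Rle_trans with (lsum (fun i => 2 * y1 i ^ 2 + 2 * y2 i ^ 2) (seq 0 n)).
 - apply lsum_le. intros i _. pose proof (pow2_ge_0 (y1 i)). pose proof (pow2_ge_0 (y2 i)).
   unfold off_sq. destruct (existsb (Nat.eqb i) Lam) eqn:E; [lra|].
   assert (Hni : ~ In i Lam) by (rewrite <- existsb_eqb_In; congruence).
   pose proof (proj1 (schur_row b1 z1 a1 Hb1 Hz1 Hr1 Hs1 i)) as He1.
   pose proof (proj1 (schur_row b2 z2 a2 Hb2 Hz2 Hr2 Hs2 i)) as He2.
   destruct (Series_dominated (fun j => A i j * v j) (fun j => b1 i j * z1 j + b2 i j * z2 j)
               (Hdom i Hni) (ex_series_plus _ _ He1 He2)) as [_ Hle].
   rewrite Series_plus in Hle by auto.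
   fold (y1 i) (y2 i) in Hle. unfold apply_mat.
   assert (Series (fun j => A i j * v j) ^ 2 <= (y1 i + y2 i) ^ 2).
   { rewrite <- pow2_abs. apply pow_incr. split; auto. apply Rabs_pos. }
   pose proof (pow2_ge_0 (y1 i - y2 i)). nra.
 - rewrite lsum_plus, !lsum_scal. unfold y1, y2.
   pose proof (schur_test b1 z1 a1 be1 Hb1 Hz1 Hr1 Hc1 Hs1 n).
   pose proof (schur_test b2 z2 a2 be2 Hb2 Hz2 Hr2 Hc2 Hs2 n). lra.
Qed.

Definition ball (r j : nat) : list nat := seq (j - r) (2 * r + 1).

Lemma in_ball r i j : Rabs (INR i - INR j) <= INR r -> In i (ball r j).
Proof.
 intros H. unfold ball. apply in_seq. apply Rabs_le_between' in H.
 assert (H1 : INR i <= INR j + INR r) by lra.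
 assert (H2 : INR j <= INR i + INR r) by lra.
 rewrite <- plus_INR in H1, H2. apply INR_le in H1. apply INR_le in H2. lia.
Qed.

Lemma length_flat_map_ball (r : nat -> nat) S :
  INR (length (flat_map (fun j => ball (r j) j) S)) = lsum (fun j => 2 * INR (r j) + 1) S.
Proof.
 induction S; [reflexivity|]. simpl flat_map.
 rewrite length_app, plus_INR, IHS, lsum_cons. unfold ball.
 rewrite length_seq, plus_INR, mult_INR. simpl. ring.
Qed.

Lemma NoDup_extend (L : list nat) N : (length L <= N)%nat ->
  exists L', NoDup L' /\ length L' = N /\ incl L L'.
Proof.
 intros H. destruct (incl_seq_max L) as [m Hm].
 set (L0 := nodup Nat.eq_dec L).
 assert (Hl0 : (length L0 <= length L)%nat).
 { apply NoDup_incl_length; [apply NoDup_nodup|]. intros x Hx. apply nodup_In in Hx; auto. }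
 exists (L0 ++ seq m (N - length L0)). split; [|split].
 - apply NoDup_app; [apply NoDup_nodup|apply seq_NoDup|].
   intros x Hx Hx2. apply nodup_In, Hm, in_seq in Hx. apply in_seq in Hx2. lia.
 - rewrite length_app, length_seq. lia.
 - intros x Hx. apply in_or_app. left. apply nodup_In. auto.
Qed.

(** * Matrices with exponential off-diagonal decay *)

Section Decay.
Variables (A : nat -> nat -> R) (c a : R).
Hypothesis c_pos : 0 < c.
Hypothesis a_pos : 0 < a.
Hypothesis A_decay : forall m n, Rabs (A m n) <= c * exp (- a * Rabs (INR m - INR n)).

Definition decay_kernel (i j : nat) := c * exp (- a * Rabs (INR i - INR j)).

Lemma decay_kernel_nonneg i j : 0 <= decay_kernel i j.
Proof. apply Rmult_le_pos; [lra|left; apply exp_pos]. Qed.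

Lemma decay_kernel_row i m : lsum (decay_kernel i) (seq 0 m) <= c * exp_dist_const a.
Proof.
 unfold decay_kernel. rewrite lsum_scal.
 apply Rmult_le_compat_l; [lra|apply lsum_exp_dist_le; auto].
Qed.

Lemma decay_kernel_col j n : lsum (fun i => decay_kernel i j) (seq 0 n) <= c * exp_dist_const a.
Proof.
 unfold decay_kernel. rewrite lsum_scal.
 apply Rmult_le_compat_l; [lra|apply lsum_exp_dist_le_col; auto].
Qed.

Lemma tail_sq_apply_decay (v z : nat -> R) (Lam : list nat) :
  (forall j, 0 <= z j) -> ex_series (fun j => z j ^ 2) ->
  (forall i, ~ In i Lam -> forall j, Rabs (A i j * v j) <= decay_kernel i j * z j) ->
  ex_series (off_sq (apply_mat A v) Lam) /\
  tail_sq (apply_mat A v) Lam <= 2 * (c * exp_dist_const a) ^ 2 * Series (fun j => z j ^ 2).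
Proof.
 intros Hz Hs Hd.
 assert (Z : is_series (fun j => (fun _ : nat => 0) j ^ 2) 0).
 { eapply is_series_ext; [|apply is_series_zero]. intro; simpl; ring. }
 destruct (tail_sq_apply_mat_le A v Lam decay_kernel decay_kernel z (fun _ => 0)
   _ _ _ _ decay_kernel_nonneg Hz decay_kernel_row decay_kernel_col Hs
   decay_kernel_nonneg (fun _ => Rle_refl 0) decay_kernel_row decay_kernel_col
   (ex_intro _ 0 Z)) as [H1 H2].
 { intros i Hi j. rewrite Rmult_0_r, Rplus_0_r. auto. }
 split; auto. rewrite (is_series_unique _ _ Z) in H2. lra.
Qed.

Lemma tail_sq_apply_le (v : nat -> R) Lam : ex_series (fun j => v j ^ 2) ->
  ex_series (off_sq (apply_mat A v) Lam) /\
  tail_sq (apply_mat A v) Lam <= 2 * (c * exp_dist_const a) ^ 2 * Series (fun j => v j ^ 2).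
Proof.
 intros Hs.
 rewrite <- (Series_ext (fun j => Rabs (v j) ^ 2)) by (intro; apply pow2_abs).
 apply tail_sq_apply_decay; [intro; apply Rabs_pos| |].
 - eapply ex_series_ext; [|exact Hs]. intro; rewrite pow2_abs; reflexivity.
 - intros i _ j. rewrite Rabs_mult. apply Rmult_le_compat_r; [apply Rabs_pos|apply A_decay].
Qed.

Lemma ex_series_sq_apply (v : nat -> R) : ex_series (fun j => v j ^ 2) ->
  ex_series (fun j => apply_mat A v j ^ 2).
Proof. intros Hs. exact (proj1 (tail_sq_apply_le v nil Hs)). Qed.

Lemma bestN_apply_le (v : nat -> R) M N : ex_series (fun j => v j ^ 2) ->
  Series (fun j => v j ^ 2) <= M ^ 2 -> 0 <= M ->
  real (bestN (apply_mat A v) N) <= sqrt 2 * (c * exp_dist_const a) * M.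
Proof.
 intros Hs HvM HM. set (K := c * exp_dist_const a).
 destruct (bestN_spec (apply_mat A v) N) as [_ [_ Hle]].
 eapply Rle_trans; [apply (Hle (seq 0 N)); auto using seq_NoDup, length_seq|].
 destruct (tail_sq_apply_le v (seq 0 N) Hs) as [_ Hf]. fold K in Hf.
 rewrite Rmult_assoc, <- (sqrt_pow2 (K * M)) by (apply Rmult_le_pos; auto;
   pose proof (exp_dist_const_pos a a_pos); unfold K; nra).
 rewrite <- sqrt_mult_alt by lra. apply sqrt_le_1_alt.
 pose proof (pow2_ge_0 K). replace (2 * (K * M) ^ 2) with (2 * K ^ 2 * M ^ 2) by ring. nra.
Qed.

(* Coefficients of [v] outside [Lam] only reach rows within distance [p] of them. *)
Lemma tail_sq_apply_banded p (v : nat -> R) Lam : ex_series (fun j => v j ^ 2) ->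
  banded p A ->
  tail_sq (apply_mat A v) (flat_map (ball p) Lam)
    <= 2 * (c * exp_dist_const a) ^ 2 * tail_sq v Lam.
Proof.
 intros Hs Hb.
 set (z := fun j => if existsb (Nat.eqb j) Lam then 0 else Rabs (v j)).
 change (tail_sq v Lam) with (Series (off_sq v Lam)).
 rewrite <- (Series_ext (fun j => z j ^ 2))
   by (intro j; unfold z, off_sq; destruct existsb; [simpl; ring|apply pow2_abs]).
 apply tail_sq_apply_decay.
 - intro j; unfold z; destruct existsb; [lra|apply Rabs_pos].
 - eapply ex_series_ext; [|apply (ex_series_off_sq v Lam Hs)].
   intro j; unfold z, off_sq; destruct existsb; [simpl; ring|symmetry; apply pow2_abs].
 - intros i Hi j. unfold z. destruct (existsb (Nat.eqb j) Lam) eqn:Ej.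
   + apply existsb_eqb_In in Ej. rewrite (Hb i j), Rmult_0_l, Rabs_R0, Rmult_0_r; [lra|].
     destruct (Rlt_dec (INR p) (Rabs (INR i - INR j))) as [Hl|Hl]; auto.
     exfalso. apply Hi, in_flat_map. exists j. split; auto. apply in_ball. lra.
   + rewrite Rabs_mult. apply Rmult_le_compat_r; [apply Rabs_pos|apply A_decay].
Qed.

End Decay.

(** * Banded matrices *)

Lemma Rpower_gt_0 x y : 0 < Rpower x y.
Proof. apply exp_pos. Qed.

Lemma Rpower_add_le x y t : 0 < x -> 0 < y -> 0 < t <= 1 ->
  Rpower (x + y) t <= Rpower x t + Rpower y t.
Proof.
 intros Hx Hy Ht.
 assert (D : forall z, 0 < z -> Rpower z t = z * Rpower z (t - 1)).
 { intros z Hz. replace t with (1 + (t - 1)) at 1 by ring. rewrite Rpower_plus, Rpower_1; auto. }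
 assert (Mo : forall z w, 0 < z -> z <= w -> Rpower w (t - 1) <= Rpower z (t - 1)).
 { intros z w Hz Hzw. apply exp_le_compat.
   assert (ln z <= ln w) by (apply ln_le; auto). nra. }
 rewrite (D (x + y)), (D x), (D y); try lra.
 pose proof (Mo x (x + y) Hx ltac:(lra)). pose proof (Mo y (x + y) Hy ltac:(lra)).
 rewrite Rmult_plus_distr_r. apply Rplus_le_compat; apply Rmult_le_compat_l; lra.
Qed.

Lemma Rpower_1_l y : Rpower 1 y = 1.
Proof. unfold Rpower. rewrite ln_1, Rmult_0_r. apply exp_0. Qed.

Lemma npow_S n t : npow (S n) t = Rpower (INR (S n)) t.
Proof. reflexivity. Qed.

Lemma npow_nonneg n t : 0 <= npow n t.
Proof. destruct n; [simpl; lra|left; apply Rpower_gt_0]. Qed.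

Lemma npow_succ_le n t : 0 < t <= 1 -> npow (S n) t <= npow n t + 1.
Proof.
 intros Ht. destruct n.
 - rewrite npow_S. simpl npow. replace (INR 1) with 1 by (simpl; ring). rewrite Rpower_1_l. lra.
 - rewrite !npow_S, S_INR.
   pose proof (Rpower_add_le (INR (S n)) 1 t ltac:(apply lt_0_INR; lia) ltac:(lra) Ht) as H.
   rewrite Rpower_1_l in H. exact H.
Qed.

Lemma npow_le_scaled P N N' t : (0 < P)%nat -> (N' < P * (N + 1))%nat -> 0 < t <= 1 ->
  npow N' t <= Rpower (INR P) t * (npow N t + 1).
Proof.
 intros HP HN Ht. pose proof (Rpower_gt_0 (INR P) t).
 destruct N' as [|N'].
 - pose proof (npow_nonneg N t). simpl. nra.
 - eapply Rle_trans; [|apply Rmult_le_compat_l; [lra|apply (npow_succ_le N t Ht)]].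
   rewrite npow_S.
   destruct N as [|N0].
   + replace (npow 1 t) with 1 by (symmetry; apply Rpower_1_l).
     rewrite Rmult_1_r. apply Rle_Rpower_l; [lra|]. split; [apply lt_0_INR; lia|].
     apply le_INR. lia.
   + rewrite npow_S, Rpower_mult_distr by (apply lt_0_INR; lia).
     apply Rle_Rpower_l; [lra|]. split; [apply lt_0_INR; lia|].
     rewrite <- mult_INR. apply le_INR. lia.
Qed.

Section Banded.
Variables (A : nat -> nat -> R) (c a : R) (p : nat).
Hypothesis c_pos : 0 < c.
Hypothesis a_pos : 0 < a.
Hypothesis A_decay : forall m n, Rabs (A m n) <= c * exp (- a * Rabs (INR m - INR n)).
Hypothesis A_banded : banded p A.

Let K := c * exp_dist_const a.

(* A best [N]-term index set [Lam] of [v], widened by [p] on each side, serves for [A v]. *)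
Lemma bestN_apply_banded (v : nat -> R) N N' : ex_series (fun j => v j ^ 2) ->
  ((2 * p + 1) * N <= N')%nat ->
  real (bestN (apply_mat A v) N') <= sqrt 2 * K * real (bestN v N).
Proof.
 intros Hs HN. apply Rle_plus_epsilon. intros e He.
 assert (HK0 : 0 < K) by (apply Rmult_lt_0_compat; auto; apply exp_dist_const_pos; auto).
 assert (HK : 0 < sqrt 2 * K) by (apply Rmult_lt_0_compat; [apply sqrt_lt_R0|]; lra).
 destruct (bestN_approx v N (e / (sqrt 2 * K))) as [Lam [Hnd [Hl Hlt]]].
 { apply Rdiv_lt_0_compat; auto. }
 assert (Hlen : (length (flat_map (ball p) Lam) <= N')%nat).
 { apply INR_le. rewrite (length_flat_map_ball (fun _ => p)), lsum_const, Hl.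
   apply le_INR in HN. rewrite mult_INR, plus_INR, mult_INR in HN. simpl in HN. lra. }
 destruct (NoDup_extend _ _ Hlen) as [L' [Hnd' [Hl' Hi']]].
 destruct (bestN_spec (apply_mat A v) N') as [_ [_ Hle]].
 eapply Rle_trans; [apply (Hle L' Hnd' Hl')|].
 assert (Hmono := tail_sq_antimono (apply_mat A v) _ _
   (ex_series_sq_apply A c a c_pos a_pos A_decay v Hs) Hi').
 assert (Hband := tail_sq_apply_banded A c a c_pos a_pos A_decay p v Lam Hs A_banded).
 fold K in Hband.
 apply Rle_trans with (sqrt 2 * K * sqrt (tail_sq v Lam)).
   rewrite <- (sqrt_pow2 K) by lra. rewrite <- sqrt_mult_alt by lra.
   rewrite <- sqrt_mult_alt by nra.
   apply sqrt_le_1_alt. lra.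
 - assert (0 < sqrt 2) by (apply sqrt_lt_R0; lra).
   replace e with (sqrt 2 * K * (e / (sqrt 2 * K))) by (field; lra).
   rewrite <- Rmult_plus_distr_l. apply Rmult_le_compat_l; lra.
Qed.

Lemma AG_apply_banded eta t : 0 < eta -> 0 < t <= 1 ->
  exists C : R, forall v : nat -> R, in_AG eta t v ->
    in_AG (eta / Rpower (2 * INR p + 1) t) t (apply_mat A v) /\
    real (AG_norm (eta / Rpower (2 * INR p + 1) t) t (apply_mat A v))
      <= C * real (AG_norm eta t v).
Proof.
 intros He Ht.
 assert (HK : 0 < K) by (apply Rmult_lt_0_compat; auto; apply exp_dist_const_pos; auto).
 exists (sqrt 2 * K * exp eta). intros v Hv.
 set (M := real (AG_norm eta t v)).
 pose proof (AG_norm_nonneg eta t v Hv) as HM. fold M in HM.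
 pose proof (ex_series_sq_AG eta t v Hv) as Hs.
 set (P := (2 * p + 1)%nat).
 assert (HP : INR P = 2 * INR p + 1) by (unfold P; rewrite plus_INR, mult_INR; simpl; ring).
 assert (HPp : 0 < Rpower (INR P) t) by apply Rpower_gt_0.
 enough (Hbound : forall N', real (bestN (apply_mat A v) N') *
     exp (eta / Rpower (2 * INR p + 1) t * npow N' t) <= sqrt 2 * K * exp eta * M).
 { destruct (AG_norm_le _ _ _ _ Hbound).
   repeat split; auto. exact (ex_series_sq_apply A c a c_pos a_pos A_decay v Hs). }
 intro N'. set (N := (N' / P)%nat).
 assert (HPn : P <> 0%nat) by (unfold P; lia).
 assert (HN2 : (N' < P * (N + 1))%nat).
 { pose proof (Nat.div_mod N' P HPn). pose proof (Nat.mod_upper_bound N' P HPn). unfold N. lia. }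
 assert (Hst := bestN_apply_banded v N N' Hs (Nat.Div0.mul_div_le N' P)).
 assert (Hexp : eta / Rpower (2 * INR p + 1) t * npow N' t <= eta * npow N t + eta).
 { rewrite <- HP. unfold Rdiv. rewrite Rmult_assoc.
   replace (eta * npow N t + eta) with (eta * (npow N t + 1)) by ring.
   apply Rmult_le_compat_l; [lra|].
   apply (Rmult_le_reg_l (Rpower (INR P) t)); auto.
   rewrite <- Rmult_assoc, Rinv_r, Rmult_1_l by lra.
   apply npow_le_scaled; auto. unfold P; lia. }
 assert (HbN : real (bestN v N) * exp (eta * npow N t) <= M)
   by exact (bestN_exp_le_AG_norm eta t v (proj2 Hv) N).
 pose proof (proj1 (proj2 (bestN_spec v N))).
 pose proof (proj1 (proj2 (bestN_spec (apply_mat A v) N'))).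
 eapply Rle_trans.
 { apply Rmult_le_compat; [auto|left; apply exp_pos|exact Hst|apply exp_le_compat, Hexp]. }
 rewrite exp_plus.
 assert (0 < sqrt 2) by (apply sqrt_lt_R0; lra). pose proof (exp_pos eta).
 replace (sqrt 2 * K * real (bestN v N) * (exp (eta * npow N t) * exp eta))
   with ((sqrt 2 * K * exp eta) * (real (bestN v N) * exp (eta * npow N t))) by ring.
 apply Rmult_le_compat_l; auto. apply Rmult_le_pos; [apply Rmult_le_pos|]; lra.
Qed.

End Banded.

(** * Counting coefficients above exponential thresholds *)

Lemma nat_between y : 0 <= y -> exists n : nat, y <= INR n <= y + 1.
Proof.
 intros Hy. destruct (archimed y) as [H1 H2].
 assert (Hz : (0 <= up y)%Z) by (apply le_IZR; lra).
 exists (Z.to_nat (up y)). rewrite INR_IZR_INZ, Z2Nat.id by auto. lra.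
Qed.

Lemma length_filter_lsum (f : nat -> bool) l :
  INR (length (filter f l)) = lsum (fun x => if f x then 1 else 0) l.
Proof.
 induction l as [|a l IH]; [reflexivity|]. simpl filter. rewrite lsum_cons.
 destruct (f a); [simpl length; rewrite S_INR|]; rewrite IH; ring.
Qed.

Lemma Rpower_ge_1 x y : 1 <= x -> 0 <= y -> 1 <= Rpower x y.
Proof.
 intros Hx Hy. rewrite <- exp_0. apply exp_le_compat.
 assert (0 <= ln x) by (rewrite <- ln_1; apply ln_le; lra). nra.
Qed.

(* The levels increase, so [x] exceeds exactly the first [r] of them and does not exceed
   level [r] (for [r = K] by hypothesis). *)
Lemma le_exp_count_levels x tau ap K : 0 < tau -> 0 <= ap -> x <= tau * exp (ap * INR K) ->
  x <= tau * exp (ap * INR (length (filter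
         (fun k => if Rlt_dec (tau * exp (ap * INR k)) x then true else false) (seq 0 K)))).
Proof.
 intros Htau Hap HxK.
 set (lev := fun k => tau * exp (ap * INR k)).
 assert (Hmono : forall k l, (k <= l)%nat -> lev k <= lev l).
 { intros k l Hkl. apply Rmult_le_compat_l; [lra|]. apply exp_le_compat.
   apply Rmult_le_compat_l; auto. apply le_INR; auto. }
 set (r := length (filter (fun k => if Rlt_dec (lev k) x then true else false) (seq 0 K))).
 destruct (Rle_dec x (lev r)) as [|Hgt]; auto. exfalso.
 assert (Hr : (r < K)%nat).
 { destruct (Nat.lt_ge_cases r K) as [|HKr]; auto. apply Hmono in HKr. unfold lev in *. lra. }
 assert (Hall : incl (seq 0 (S r))
                  (filter (fun k => if Rlt_dec (lev k) x then true else false) (seq 0 K))).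
 { intros k Hk. apply in_seq in Hk. apply filter_In. split; [apply in_seq; lia|].
   destruct Rlt_dec as [|Hn]; auto. exfalso. apply Hn.
   apply Rle_lt_trans with (lev r); [apply Hmono; lia|lra]. }
 apply NoDup_incl_length in Hall; [|apply seq_NoDup]. rewrite length_seq in Hall.
 unfold r in Hall. lia.
Qed.

Definition pos_rpow (x s : R) : R := if Rlt_dec 0 x then Rpower x s else 0.

Lemma pos_rpow_nonneg x s : 0 <= pos_rpow x s.
Proof. unfold pos_rpow. destruct Rlt_dec; [left; apply Rpower_gt_0|lra]. Qed.

Lemma Rpower_increment_ge Y th s : 0 < Y -> 0 < th -> 0 <= s ->
  (1 + s) * th * Rpower Y s <= Rpower (Y + th) (1 + s) - Rpower Y (1 + s).
Proof.
 intros HY Hth Hs.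
 destruct (MVT_cor2 (fun x => Rpower x (1 + s)) (fun x => (1 + s) * Rpower x (1 + s - 1))
   Y (Y + th)) as [c0 [Hc1 Hc2]]; [lra| |].
 { intros c0 Hc. apply derivable_pt_lim_power. lra. }
 rewrite Hc1. replace (1 + s - 1) with s by ring. replace (Y + th - Y) with th by ring.
 assert (Rpower Y s <= Rpower c0 s) by (apply Rle_Rpower_l; lra).
 replace ((1 + s) * Rpower c0 s * th) with ((1 + s) * th * Rpower c0 s) by ring.
 apply Rmult_le_compat_l; auto. apply Rmult_le_pos; lra.
Qed.

(* Compares the sum with the integral of [y^s] over [0, X]. *)
Lemma lsum_pos_rpow_levels_le X th s K : 0 < X -> 0 < th -> 0 <= s ->
  lsum (fun k => pos_rpow (X - INR k * th) s) (seq 0 K)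
    <= Rpower X s + Rpower X (1 + s) / ((1 + s) * th).
Proof.
 intros HX Hth Hs.
 set (U := fun k => pos_rpow (X - INR k * th) s).
 set (W := fun k => pos_rpow (X - INR k * th) (1 + s)).
 assert (Hp : 0 < (1 + s) * th) by (apply Rmult_lt_0_compat; lra).
 assert (HU0 : U 0%nat = Rpower X s).
 { unfold U, pos_rpow. simpl INR. rewrite Rmult_0_l, Rminus_0_r.
   destruct Rlt_dec; [reflexivity|lra]. }
 assert (HW0 : W 0%nat = Rpower X (1 + s)).
 { unfold W, pos_rpow. simpl INR. rewrite Rmult_0_l, Rminus_0_r.
   destruct Rlt_dec; [reflexivity|lra]. }
 assert (Hstep : forall k, U (S k) <= (W k - W (S k)) / ((1 + s) * th)).
 { intro k. apply (Rmult_le_reg_l ((1 + s) * th)); auto.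
   unfold Rdiv. rewrite (Rmult_comm (W k - W (S k))), <- Rmult_assoc, Rinv_r, Rmult_1_l by lra.
   unfold U, W, pos_rpow.
   replace (X - INR k * th) with (X - INR (S k) * th + th) by (rewrite S_INR; ring).
   destruct (Rlt_dec 0 (X - INR (S k) * th)).
   - destruct Rlt_dec; [apply Rpower_increment_ge; auto|lra].
   - rewrite Rmult_0_r, Rminus_0_r. destruct Rlt_dec; [left; apply Rpower_gt_0|lra]. }
 assert (Htel : forall K, lsum U (seq 0 (S K)) <= U 0%nat + (W 0%nat - W K) / ((1 + s) * th)).
 { induction K0 as [|K0 IH].
   - simpl. unfold Rdiv. rewrite Rminus_diag, Rmult_0_l. lra.
   - rewrite lsum_seq_S. pose proof (Hstep K0). unfold Rdiv in *. lra. }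
 destruct K as [|K].
 - simpl. pose proof (Rpower_gt_0 X s). pose proof (Rpower_gt_0 X (1 + s)).
   assert (0 <= Rpower X (1 + s) / ((1 + s) * th)) by (apply Rdiv_le_0_compat; lra). lra.
 - eapply Rle_trans; [apply Htel|]. rewrite HU0, HW0.
   assert (0 <= W K) by apply pos_rpow_nonneg.
   apply Rplus_le_compat_l. unfold Rdiv. apply Rmult_le_compat_r; [|lra].
   left; apply Rinv_0_lt_compat; auto.
Qed.

Section Levels.
Variables (eta t : R) (v : nat -> R).
Hypothesis Hv : in_AG eta t v.
Hypothesis eta_pos : 0 < eta.
Hypothesis t_range : 0 < t <= 1.

Let M := real (AG_norm eta t v).

Lemma bestN_le_exp_level Y : 0 < Y -> exists n, INR n <= Rpower Y (/ t) + 1 /\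
  real (bestN v n) <= M * exp (- eta * Y).
Proof.
 intros HY. pose proof (Rpower_gt_0 Y (/ t)).
 destruct (nat_between (Rpower Y (/ t))) as [n [H1 H2]]; [lra|].
 exists n. split; auto.
 eapply Rle_trans; [apply (bestN_le_AG_norm eta t v Hv n)|].
 apply Rmult_le_compat_l; [apply AG_norm_nonneg; auto|]. apply exp_le_compat.
 assert (Y <= npow n t); [|nra].
 destruct n as [|n]; [simpl in H1; lra|]. rewrite npow_S.
 replace Y with (Rpower (Rpower Y (/ t)) t) at 1.
 - apply Rle_Rpower_l; lra.
 - rewrite Rpower_mult, Rinv_l by lra. apply Rpower_1; auto.
Qed.

(* A near-best [N]-term set misses at most three coefficients above [sig]. *)
Lemma card_large_coefs_le sig N (l : list nat) : 0 < sig -> real (bestN v N) <= sig ->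
  NoDup l -> (forall j, In j l -> sig < Rabs (v j)) -> (length l <= N + 4)%nat.
Proof.
 intros Hs Hb Hnd Hl.
 destruct (bestN_approx v N sig Hs) as [Lam [HLnd [HLl HLt]]].
 assert (Ht0 := tail_sq_nonneg v Lam (ex_series_sq_AG eta t v Hv)).
 assert (Htail : tail_sq v Lam < 4 * sig ^ 2).
 { rewrite <- (sqrt_sqrt (tail_sq v Lam)) by auto. pose proof (sqrt_pos (tail_sq v Lam)). nra. }
 set (f := fun j => existsb (Nat.eqb j) Lam).
 pose proof (filter_length f l) as Hsplit.
 assert (H1 : (length (filter f l) <= N)%nat).
 { rewrite <- HLl. apply NoDup_incl_length; [apply NoDup_filter; auto|].
   intros x Hx. apply filter_In in Hx. apply existsb_eqb_In. apply Hx. }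
 set (l2 := filter (fun x => negb (f x)) l).
 assert (Hl2 : forall j, In j l2 -> sig < Rabs (v j) /\ off_sq v Lam j = v j ^ 2).
 { intros j Hj. apply filter_In in Hj. destruct Hj as [Hj Hn]. split; auto.
   unfold off_sq. unfold f in Hn. destruct existsb; [discriminate|reflexivity]. }
 assert (Hsum : lsum (off_sq v Lam) l2 <= tail_sq v Lam).
 { apply lsum_NoDup_le_Series; [apply off_sq_nonneg| |apply NoDup_filter; auto].
   apply ex_series_off_sq, (ex_series_sq_AG eta t v Hv). }
 assert (Hlow : sig ^ 2 * INR (length l2) <= lsum (off_sq v Lam) l2).
 { rewrite <- lsum_const. apply lsum_le. intros j Hj. destruct (Hl2 j Hj) as [Ha ->].
   rewrite <- (pow2_abs (v j)). apply pow_incr. split; lra. }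
 assert (INR (length l2) < 4).
 { assert (0 < sig ^ 2) by (apply pow_lt; auto). apply (Rmult_lt_reg_l (sig ^ 2)); lra. }
 assert (length l2 < 4)%nat by (apply INR_lt; simpl; lra).
 unfold l2 in *. lia.
Qed.

Lemma card_above_level_le Y (l : list nat) : NoDup l ->
  (forall j, In j l -> M * exp (- eta * Y) < Rabs (v j)) -> INR (length l) <= pos_rpow Y (/ t) + 5.
Proof.
 intros Hnd Hl. pose proof (pos_rpow_nonneg Y (/ t)).
 destruct l as [|j0 l0]; [simpl; lra|].
 assert (Hj0 := Hl j0 (or_introl eq_refl)).
 assert (Hv0 := Rabs_coef_le_AG_norm eta t v Hv j0). fold M in Hv0.
 unfold pos_rpow. destruct (Rlt_dec 0 Y) as [HY|HY].
 - destruct (bestN_le_exp_level Y HY) as [n [Hn1 Hn2]].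
   assert (HM : 0 < M * exp (- eta * Y)).
   { apply Rmult_lt_0_compat; [|apply exp_pos].
     assert (0 < M) by (pose proof (Rabs_pos (v j0)); pose proof (exp_pos (- eta * Y)); nra). lra. }
   pose proof (card_large_coefs_le _ n _ HM Hn2 Hnd Hl) as Hc.
   apply le_INR in Hc. rewrite plus_INR in Hc. simpl in Hc |- *. lra.
 - exfalso. assert (M <= M * exp (- eta * Y)); [|lra].
   rewrite <- (Rmult_1_r M) at 1. apply Rmult_le_compat_l; [apply AG_norm_nonneg; auto|].
   rewrite <- exp_0. apply exp_le_compat. nra.
Qed.

Lemma large_coefs_list tau : 0 < tau ->
  exists S : list nat, NoDup S /\ forall j, In j S <-> tau < Rabs (v j).
Proof.
 intros Htau. assert (Hl := ex_series_lim_0 _ (ex_series_sq_AG eta t v Hv)).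
 apply is_lim_seq_spec in Hl. assert (He : 0 < tau ^ 2) by (apply pow_lt; auto).
 destruct (Hl (mkposreal _ He)) as [N0 HN]. cbn [pos] in HN.
 exists (filter (fun j => if Rlt_dec tau (Rabs (v j)) then true else false) (seq 0 N0)).
 split; [apply NoDup_filter, seq_NoDup|].
 intro j. rewrite filter_In, in_seq. split.
 - intros [_ H]. destruct Rlt_dec; [auto|discriminate].
 - intros H. split; [|destruct Rlt_dec; auto]. split; [lia|].
   destruct (Nat.lt_ge_cases j N0) as [|Hj]; auto. exfalso.
   specialize (HN j Hj). cbv beta in HN.
   rewrite Rminus_0_r, Rabs_pos_eq, <- pow2_abs in HN by apply pow2_ge_0.
   assert (tau * tau < Rabs (v j) * Rabs (v j)) by (apply Rmult_le_0_lt_compat; lra).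
   simpl in HN. lra.
Qed.

End Levels.

(** * Dense matrices with exponential decay *)

Definition indicator (L : list nat) (j : nat) : R := if existsb (Nat.eqb j) L then 1 else 0.

Lemma indicator_nonneg L j : 0 <= indicator L j.
Proof. unfold indicator; destruct existsb; lra. Qed.

Lemma lsum_indicator_le L n : NoDup L -> lsum (indicator L) (seq 0 n) <= INR (length L).
Proof.
 intros H. unfold indicator. rewrite <- length_filter_lsum. apply le_INR, NoDup_incl_length.
 - apply NoDup_filter, seq_NoDup.
 - intros x Hx. apply filter_In in Hx. apply existsb_eqb_In. apply Hx.
Qed.

Lemma Series_sq_le_indicator (z w : nat -> R) (L : list nat) tau :
  NoDup L -> (forall j, 0 <= w j) -> ex_series w ->
  (forall j, z j ^ 2 <= w j + tau ^ 2 * indicator L j) ->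
  ex_series (fun j => z j ^ 2) /\
  Series (fun j => z j ^ 2) <= Series w + tau ^ 2 * INR (length L).
Proof.
 intros Hnd Hw He Hz. apply ex_Series_le_of_lsum; [intro; apply pow2_ge_0|].
 intro n. eapply Rle_trans; [apply (lsum_le _ (fun j => w j + tau ^ 2 * indicator L j)); auto|].
 rewrite lsum_plus, lsum_scal. apply Rplus_le_compat.
 - apply lsum_seq_le_Series; auto.
 - apply Rmult_le_compat_l; [apply pow2_ge_0|apply lsum_indicator_le; auto].
Qed.

Section Dense.
Variables (A : nat -> nat -> R) (c a eta t : R) (v : nat -> R).
Hypothesis c_pos : 0 < c.
Hypothesis a_pos : 0 < a.
Hypothesis A_decay : forall m n, Rabs (A m n) <= c * exp (- a * Rabs (INR m - INR n)).
Hypothesis eta_pos : 0 < eta.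
Hypothesis eta_lt_a : eta < a.
Hypothesis t_range : 0 < t <= 1.
Hypothesis Hv : in_AG eta t v.

Let M := real (AG_norm eta t v).

(* The thresholds grow like [e^(mid_rate k)] with [eta < mid_rate < a]: a large
   coefficient spread over distance [d] is still damped by [e^(-margin_rate d)], and one
   level up in [k] lowers the exponent [eta Y] of the threshold by [eta level_step]. *)
Definition mid_rate := (a + eta) / 2.
Definition margin_rate := (a - eta) / 2.
Definition level_step := mid_rate / eta.

Lemma level_step_gt_1 : 1 < level_step.
Proof.
 unfold level_step, mid_rate. apply (Rmult_lt_reg_r eta); auto.
 unfold Rdiv. rewrite Rmult_assoc, Rinv_l; lra.
Qed.

Definition level_count (tau : R) (K j : nat) : nat :=
  length (filter (fun k => if Rlt_dec (tau * exp (mid_rate * INR k)) (Rabs (v j))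
                           then true else false) (seq 0 K)).

Lemma Rabs_coef_le_level X K j : X / level_step <= INR K -> 0 < M ->
  Rabs (v j) <= M * exp (- eta * X) * exp (mid_rate * INR (level_count (M * exp (- eta * X)) K j)).
Proof.
 intros HK HM. apply le_exp_count_levels.
 - apply Rmult_lt_0_compat; [auto|apply exp_pos].
 - unfold mid_rate; lra.
 - eapply Rle_trans; [apply Rabs_coef_le_AG_norm; eauto|]. fold M.
   rewrite Rmult_assoc, <- exp_plus. rewrite <- (Rmult_1_r M) at 1.
   apply Rmult_le_compat_l; [lra|]. rewrite <- exp_0. apply exp_le_compat.
   assert (mid_rate * (X / level_step) <= mid_rate * INR K)
     by (apply Rmult_le_compat_l; [unfold mid_rate|]; lra).
   replace (mid_rate * (X / level_step)) with (eta * X) in H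
     by (unfold level_step, mid_rate; field; lra). lra.
Qed.

(* Each level [k] is a threshold [M e^(-eta Y)] with [Y = X - k level_step]. *)
Lemma lsum_level_count_le X K S : 0 < X -> NoDup S ->
  lsum (fun j => INR (level_count (M * exp (- eta * X)) K j)) S
    <= Rpower X (/ t) + Rpower X (1 + / t) / ((1 + / t) * level_step) + 5 * INR K.
Proof.
 intros HX HS. pose proof level_step_gt_1.
 set (tau := M * exp (- eta * X)).
 set (test := fun k j => if Rlt_dec (tau * exp (mid_rate * INR k)) (Rabs (v j)) then true else false).
 transitivity (lsum (fun k => INR (length (filter (fun j => test k j) S))) (seq 0 K)).
 { right. transitivity (lsum (fun j => lsum (fun k => if test k j then 1 else 0) (seq 0 K)) S).
   - apply lsum_ext. intros j _. apply length_filter_lsum.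
   - rewrite lsum_swap. apply lsum_ext. intros k _. symmetry. apply length_filter_lsum. }
 eapply Rle_trans.
 { apply (lsum_le _ (fun k => pos_rpow (X - INR k * level_step) (/ t) + 5)).
   intros k _. apply (card_above_level_le eta t v Hv eta_pos t_range);
     [apply NoDup_filter; auto|].
   intros j Hj. apply filter_In in Hj. destruct Hj as [_ Hj]. unfold test in Hj.
   destruct Rlt_dec as [Hlt|]; [|discriminate]. fold M. unfold tau in Hlt.
   rewrite Rmult_assoc, <- exp_plus in Hlt.
   replace (- eta * X + mid_rate * INR k) with (- eta * (X - INR k * level_step)) in Hlt
     by (unfold level_step; field; lra). exact Hlt. }
 rewrite lsum_plus, lsum_const, length_seq.
 pose proof (lsum_pos_rpow_levels_le X level_step (/ t) K HX ltac:(lra)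
   ltac:(left; apply Rinv_0_lt_compat; lra)). lra.
Qed.

Lemma apply_coef_dominated X K S i j : X / level_step <= INR K -> 0 < M ->
  (forall j, In j S <-> M * exp (- eta * X) < Rabs (v j)) ->
  ~ In i (flat_map (fun j => ball (level_count (M * exp (- eta * X)) K j) j) S) ->
  Rabs (A i j * v j) <=
    decay_kernel c a i j * (if existsb (Nat.eqb j) S then 0 else Rabs (v j))
    + decay_kernel c margin_rate i j * (M * exp (- eta * X) * indicator S j).
Proof.
 intros HK HM HS Hi. set (tau := M * exp (- eta * X)) in *.
 rewrite Rabs_mult. unfold indicator, decay_kernel.
 destruct (existsb (Nat.eqb j) S) eqn:Ej.
 - rewrite Rmult_0_r, Rplus_0_l, Rmult_1_r. apply existsb_eqb_In in Ej.
   set (d := Rabs (INR i - INR j)).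
   assert (Hd : INR (level_count tau K j) < d).
   { destruct (Rlt_dec (INR (level_count tau K j)) d) as [|Hn]; auto. exfalso. apply Hi.
     apply in_flat_map. exists j. split; auto. apply in_ball. fold d. lra. }
   assert (Hvj : Rabs (v j) <= tau * exp (mid_rate * d)).
   { eapply Rle_trans; [apply Rabs_coef_le_level; eauto|]. fold tau.
     apply Rmult_le_compat_l; [unfold tau; pose proof (exp_pos (- eta * X)); nra|].
     apply exp_le_compat, Rmult_le_compat_l; [unfold mid_rate|]; lra. }
   eapply Rle_trans; [apply Rmult_le_compat; [apply Rabs_pos|apply Rabs_pos|apply A_decay|exact Hvj]|].
   right. fold d. replace (- margin_rate * d) with (- a * d + mid_rate * d)
     by (unfold margin_rate, mid_rate; field). rewrite exp_plus. ring.
 - rewrite !Rmult_0_r, Rplus_0_r. apply Rmult_le_compat_r; [apply Rabs_pos|apply A_decay].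
Qed.


Lemma Series_sq_small_coefs_le X S : 0 < X -> 0 < M ->
  (forall j, In j S <-> M * exp (- eta * X) < Rabs (v j)) ->
  ex_series (fun j => (if existsb (Nat.eqb j) S then 0 else Rabs (v j)) ^ 2) /\
  Series (fun j => (if existsb (Nat.eqb j) S then 0 else Rabs (v j)) ^ 2)
    <= (Rpower X (/ t) + 5) * (M * exp (- eta * X)) ^ 2.
Proof.
 intros HX HM HS. set (tau := M * exp (- eta * X)) in *.
 assert (Htau : 0 < tau) by (apply Rmult_lt_0_compat; [auto|apply exp_pos]).
 assert (Hser := ex_series_sq_AG eta t v Hv).
 destruct (bestN_le_exp_level eta t v Hv eta_pos t_range X HX) as [Nx [HNx1 HNx2]].
 destruct (bestN_approx v Nx tau Htau) as [Lam [HLnd [HLl HLt]]].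
 assert (HtL : tail_sq v Lam <= 4 * tau ^ 2).
 { assert (Ht0 := tail_sq_nonneg v Lam Hser). fold M tau in HNx2.
   rewrite <- (sqrt_sqrt (tail_sq v Lam)) by auto. pose proof (sqrt_pos (tail_sq v Lam)). nra. }
 destruct (Series_sq_le_indicator (fun j => if existsb (Nat.eqb j) S then 0 else Rabs (v j))
             (off_sq v Lam) Lam tau HLnd (off_sq_nonneg v Lam)
             (ex_series_off_sq v Lam Hser)) as [He Hle].
 { intro j. pose proof (indicator_nonneg Lam j). pose proof (pow2_ge_0 tau).
   destruct (existsb (Nat.eqb j) S) eqn:Ej; [pose proof (off_sq_nonneg v Lam j); simpl; nra|].
   assert (Hnj : Rabs (v j) <= tau).
   { destruct (Rle_dec (Rabs (v j)) tau) as [|Hn]; auto.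
     assert (Hin : In j S) by (apply HS; lra). apply existsb_eqb_In in Hin. congruence. }
   rewrite pow2_abs. unfold off_sq, indicator. destruct (existsb (Nat.eqb j) Lam); [|lra].
   rewrite <- pow2_abs. pose proof (pow_incr _ _ 2 (conj (Rabs_pos (v j)) Hnj)). lra. }
 split; auto. change (Series (off_sq v Lam)) with (tail_sq v Lam) in Hle.
 rewrite HLl in Hle. pose proof (pow2_ge_0 tau).
 assert (tau ^ 2 * INR Nx <= tau ^ 2 * (Rpower X (/ t) + 1)) by (apply Rmult_le_compat_l; lra).
 lra.
Qed.

Let balls (tau : R) (K : nat) (S : list nat) :=
  flat_map (fun j => ball (level_count tau K j) j) S.

Lemma length_balls_le X K S N' : 0 < X -> NoDup S ->
  INR (length S) <= Rpower X (/ t) + 5 -> INR K <= X / level_step + 1 ->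
  3 * Rpower X (/ t) + 2 * Rpower X (1 + / t) / ((1 + / t) * level_step)
    + 10 * X / level_step + 15 <= INR N' ->
  (length (balls (M * exp (- eta * X)) K S) <= N')%nat.
Proof.
 intros HX HS HSlen HK Hbudget. apply INR_le. unfold balls.
 rewrite length_flat_map_ball, lsum_plus, lsum_scal, lsum_const.
 pose proof (lsum_level_count_le X K S HX HS).
 assert (10 * INR K <= 10 * X / level_step + 10) by (unfold Rdiv in *; lra). lra.
Qed.

Lemma tail_sq_apply_dense_le X K S : 0 < X -> 0 < M -> NoDup S ->
  X / level_step <= INR K -> INR (length S) <= Rpower X (/ t) + 5 ->
  (forall j, In j S <-> M * exp (- eta * X) < Rabs (v j)) ->
  tail_sq (apply_mat A v) (balls (M * exp (- eta * X)) K S)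
    <= 2 * ((c * exp_dist_const a) ^ 2 + (c * exp_dist_const margin_rate) ^ 2)
       * (Rpower X (/ t) + 5) * (M * exp (- eta * X)) ^ 2.
Proof.
 intros HX HM HSnd HK HSlen HS.
 assert (Hm : 0 < margin_rate) by (unfold margin_rate; lra).
 set (tau := M * exp (- eta * X)) in *.
 assert (Htau : 0 < tau) by (apply Rmult_lt_0_compat; [auto|apply exp_pos]).
 destruct (Series_sq_small_coefs_le X S HX HM HS) as [Hz1s Hz1b]. fold M tau in Hz1b.
 destruct (Series_sq_le_indicator (fun j => tau * indicator S j) (fun _ => 0) S tau HSnd
             (fun _ => Rle_refl 0) (ex_intro _ 0 is_series_zero)) as [Hz2s Hz2b].
 { intro j. unfold indicator. destruct existsb; simpl; lra. }
 rewrite (is_series_unique _ _ is_series_zero) in Hz2b.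
 assert (Hz1 : forall j, 0 <= (if existsb (Nat.eqb j) S then 0 else Rabs (v j)))
   by (intro j; destruct existsb; [lra|apply Rabs_pos]).
 destruct (tail_sq_apply_mat_le A v (balls tau K S) (decay_kernel c a) (decay_kernel c margin_rate)
   _ _ _ _ _ _ (decay_kernel_nonneg c a c_pos) Hz1
   (decay_kernel_row c a c_pos a_pos) (decay_kernel_col c a c_pos a_pos) Hz1s
   (decay_kernel_nonneg c _ c_pos) (fun j => Rmult_le_pos _ _ (Rlt_le _ _ Htau) (indicator_nonneg S j))
   (decay_kernel_row c _ c_pos Hm) (decay_kernel_col c _ c_pos Hm) Hz2s) as [_ Htail].
 { intros i Hi j. apply apply_coef_dominated with K; auto. }
 set (K1 := c * exp_dist_const a) in *. set (K2 := c * exp_dist_const margin_rate) in *.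
 assert (S2 : tau ^ 2 * INR (length S) <= (Rpower X (/ t) + 5) * tau ^ 2)
   by (rewrite Rmult_comm; apply Rmult_le_compat_r; [apply pow2_ge_0|lra]).
 assert (0 <= K1 ^ 2) by apply pow2_ge_0. assert (0 <= K2 ^ 2) by apply pow2_ge_0.
 assert (K1 ^ 2 * Series (fun j => (if existsb (Nat.eqb j) S then 0 else Rabs (v j)) ^ 2)
           <= K1 ^ 2 * ((Rpower X (/ t) + 5) * tau ^ 2)) by (apply Rmult_le_compat_l; auto).
 assert (K2 ^ 2 * Series (fun j => (tau * indicator S j) ^ 2)
           <= K2 ^ 2 * ((Rpower X (/ t) + 5) * tau ^ 2)) by (apply Rmult_le_compat_l; lra).
 replace (K1 * K1) with (K1 ^ 2) in Htail by ring. replace (K2 * K2) with (K2 ^ 2) in Htail by ring.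
 nra.
Qed.

Lemma bestN_apply_dense X N' : 0 < X -> 0 < M ->
  3 * Rpower X (/ t) + 2 * Rpower X (1 + / t) / ((1 + / t) * level_step)
    + 10 * X / level_step + 15 <= INR N' ->
  real (bestN (apply_mat A v) N') <=
    sqrt (2 * ((c * exp_dist_const a) ^ 2 + (c * exp_dist_const margin_rate) ^ 2)
            * (Rpower X (/ t) + 5)) * (M * exp (- eta * X)).
Proof.
 intros HX HM Hbudget. pose proof level_step_gt_1.
 set (tau := M * exp (- eta * X)).
 assert (Htau : 0 < tau) by (apply Rmult_lt_0_compat; [auto|apply exp_pos]).
 destruct (large_coefs_list eta t v Hv tau Htau) as [S [HSnd HS]].
 assert (HSlen : INR (length S) <= Rpower X (/ t) + 5).
 { replace (Rpower X (/ t)) with (pos_rpow X (/ t)) by (unfold pos_rpow; destruct Rlt_dec; lra).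
   apply (card_above_level_le eta t v Hv eta_pos t_range); auto. intros j Hj. apply HS; auto. }
 destruct (nat_between (X / level_step)) as [K [HK1 HK2]];
   [left; apply Rdiv_lt_0_compat; lra|].
 destruct (NoDup_extend _ N' (length_balls_le X K S N' HX HSnd HSlen HK2 Hbudget))
   as [L' [HL'nd [HL'l HL'i]]].
 destruct (bestN_spec (apply_mat A v) N') as [_ [_ Hle]].
 eapply Rle_trans; [apply (Hle L' HL'nd HL'l)|].
 assert (Hmono := tail_sq_antimono (apply_mat A v) _ _
   (ex_series_sq_apply A c a c_pos a_pos A_decay v (ex_series_sq_AG eta t v Hv)) HL'i).
 fold tau in Hmono.
 pose proof (tail_sq_apply_dense_le X K S HX HM HSnd HK1 HSlen HS). fold tau in H0.
 rewrite <- (sqrt_pow2 tau) by lra. rewrite <- sqrt_mult_alt.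
 - apply sqrt_le_1_alt. lra.
 - pose proof (pow2_ge_0 (c * exp_dist_const a)).
   pose proof (pow2_ge_0 (c * exp_dist_const margin_rate)).
   pose proof (Rpower_gt_0 X (/ t)). apply Rmult_le_pos; lra.
Qed.

End Dense.

Lemma ln_le_sub_1 y : 0 < y -> ln y <= y - 1.
Proof. intros Hy. pose proof (exp_ineq1_le (ln y)). rewrite exp_ln in H; auto. lra. Qed.

Lemma sqrt_rpow_exp_bounded s b : 0 < s -> 0 < b -> exists B0, 0 <= B0 /\ forall X, 0 < X ->
  sqrt (Rpower X s + 5) * exp (- b * X) <= B0.
Proof.
 intros Hs Hb. set (k := s / (2 * b)).
 assert (Hk : 0 < k) by (unfold k; apply Rdiv_lt_0_compat; lra).
 exists (sqrt 6 * exp (s / 2 * (ln k - 1) + b)).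
 split; [apply Rmult_le_pos; [apply sqrt_pos|left; apply exp_pos]|].
 intros X HX.
 assert (H1 : Rpower X s + 5 <= 6 * Rpower (1 + X) s).
 { assert (Rpower X s <= Rpower (1 + X) s) by (apply Rle_Rpower_l; lra).
   assert (1 <= Rpower (1 + X) s) by (apply Rpower_ge_1; lra). lra. }
 assert (H2 : sqrt (Rpower X s + 5) <= sqrt 6 * exp (s / 2 * ln (1 + X))).
 { eapply Rle_trans; [apply sqrt_le_1_alt, H1|]. rewrite sqrt_mult_alt by lra.
   apply Rmult_le_compat_l; [apply sqrt_pos|]. right.
   rewrite <- Rpower_sqrt by apply Rpower_gt_0. rewrite Rpower_mult. reflexivity. }
 (* [ln y <= y - 1] at [y = (1 + X) / k] *)
 assert (H3 : s / 2 * ln (1 + X) - b * X <= s / 2 * (ln k - 1) + b).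
 { assert (E : ln (1 + X) = ln k + ln ((1 + X) / k)).
   { rewrite <- ln_mult by (try apply Rdiv_lt_0_compat; lra). f_equal. field. lra. }
   pose proof (ln_le_sub_1 ((1 + X) / k) ltac:(apply Rdiv_lt_0_compat; lra)).
   assert (E2 : s / 2 * ((1 + X) / k) = b * (1 + X)) by (unfold k; field; lra).
   rewrite E. assert (s / 2 * ln ((1 + X) / k) <= s / 2 * ((1 + X) / k - 1))
     by (apply Rmult_le_compat_l; lra).
   lra. }
 eapply Rle_trans; [apply Rmult_le_compat_r; [left; apply exp_pos|exact H2]|].
 rewrite Rmult_assoc, <- exp_plus. apply Rmult_le_compat_l; [apply sqrt_pos|].
 apply exp_le_compat. lra.
Qed.

Lemma Rpower_lt_1 x y : 0 < x < 1 -> 0 < y -> Rpower x y < 1.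
Proof.
 intros Hx Hy. rewrite <- exp_0. apply exp_increasing.
 assert (ln x < 0) by (rewrite <- ln_1; apply ln_increasing; lra). nra.
Qed.

Lemma npow_le_INR n e : 0 <= e <= 1 -> npow n e <= INR n.
Proof.
 intros He. destruct n; [simpl; lra|]. rewrite npow_S.
 rewrite <- (Rpower_1 (INR (S n))) at 2 by (apply lt_0_INR; lia).
 apply Rle_Rpower; [apply (le_INR 1); lia|lra].
Qed.

(* The level [X] paid for by a budget of [N'] indices is [(budget_rate N')^(t/(1+t))]:
   the dominant cost [2 X^p / (p th)] of the balls is then the fraction [la < 1] of
   [N'], and the rate [zeta t N'^(t/(1+t))] equals [budget_shrink X], [budget_shrink < 1]. *)
Section Budget.
Variables (t th : R).
Hypothesis t_range : 0 < t <= 1.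
Hypothesis th_gt_1 : 1 < th.

Let s := / t.
Let p := 1 + s.
Let e2 := t / (1 + t).
Definition budget_rate := p * (t + th) / 4.
Let ga := budget_rate.
Let la := (t + th) / (2 * th).
Definition budget_start := (1 + Rpower (28 * ga / (1 - la)) p) / ga.
Definition budget_shrink := Rpower ((1 + t) / (2 * ga)) e2.
Definition budget_level (N' : nat) := Rpower (ga * INR N') e2.

Lemma budget_rate_pos : 0 < ga.
Proof.
 unfold ga, budget_rate, p, s. apply Rdiv_lt_0_compat; [|lra].
 apply Rmult_lt_0_compat; [|lra]. pose proof (Rinv_0_lt_compat t ltac:(lra)). lra.
Qed.

Lemma budget_shrink_lt_1 : budget_shrink < 1.
Proof.
 pose proof budget_rate_pos. unfold budget_shrink. apply Rpower_lt_1.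
 - split; [apply Rdiv_lt_0_compat; lra|].
   assert (E : 2 * ga - (1 + t) = (1 + t) * (th - t) / (2 * t))
     by (unfold ga, budget_rate, p, s; field; lra).
   assert (0 < (1 + t) * (th - t) / (2 * t))
     by (apply Rdiv_lt_0_compat; [apply Rmult_lt_0_compat|]; lra).
   apply (Rmult_lt_reg_r (2 * ga)); [lra|].
   unfold Rdiv. rewrite Rmult_assoc, Rinv_l, Rmult_1_r, Rmult_1_l by lra. lra.
 - unfold e2. apply Rdiv_lt_0_compat; lra.
Qed.

Lemma budget_level_pos N' : 0 < budget_level N'.
Proof. apply Rpower_gt_0. Qed.

Lemma zeta_npow_eq_budget (N' : nat) : (0 < N')%nat ->
  zeta t * npow N' e2 = budget_shrink * budget_level N'.
Proof.
 intros HN. pose proof budget_rate_pos.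
 destruct N' as [|N'']; [lia|]. rewrite npow_S. unfold zeta, budget_shrink, budget_level. fold e2.
 assert (0 < INR (S N'')) by (apply lt_0_INR; lia).
 rewrite Rpower_mult_distr by (try apply Rmult_lt_0_compat; lra).
 rewrite Rpower_mult_distr by (try apply Rdiv_lt_0_compat; try apply Rmult_lt_0_compat; lra).
 f_equal. field. lra.
Qed.

Lemma budget_start_pos : 0 < budget_start.
Proof.
 pose proof budget_rate_pos. unfold budget_start.
 pose proof (Rpower_gt_0 (28 * ga / (1 - la)) p). apply Rdiv_lt_0_compat; lra.
Qed.

Lemma la_lt_1 : 0 < la < 1.
Proof.
 unfold la. split; [apply Rdiv_lt_0_compat; lra|].
 apply (Rmult_lt_reg_r (2 * th)); [lra|]. unfold Rdiv. rewrite Rmult_assoc, Rinv_l; lra.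
Qed.

Lemma budget_level_large N' : budget_start <= INR N' ->
  1 <= ga * INR N' /\ 28 * ga / (1 - la) <= budget_level N'.
Proof.
 intros HN. pose proof budget_rate_pos. pose proof la_lt_1.
 assert (Hp : 0 < p) by (unfold p, s; pose proof (Rinv_0_lt_compat t ltac:(lra)); lra).
 set (B1 := 28 * ga / (1 - la)).
 assert (HB1 : 0 < B1) by (unfold B1; apply Rdiv_lt_0_compat; lra).
 pose proof (Rpower_gt_0 B1 p).
 assert (Hu : Rpower B1 p <= ga * INR N').
 { unfold budget_start in HN. fold B1 in HN.
   replace (Rpower B1 p) with (ga * (Rpower B1 p / ga)) by (field; lra).
   apply Rmult_le_compat_l; [lra|]. unfold Rdiv in *. pose proof (Rinv_0_lt_compat ga H). nra. }
 split.
 - unfold budget_start in HN. fold B1 in HN.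
   replace 1 with (ga * (1 / ga)) by (field; lra).
   apply Rmult_le_compat_l; [lra|]. unfold Rdiv in *. pose proof (Rinv_0_lt_compat ga H). nra.
 - unfold budget_level. replace B1 with (Rpower (Rpower B1 p) e2).
   + apply Rle_Rpower_l; [unfold e2; apply Rdiv_le_0_compat|]; lra.
   + rewrite Rpower_mult. replace (p * e2) with 1 by (unfold e2, p, s; field; lra).
     apply Rpower_1; auto.
Qed.

Lemma budget_level_cost N' : budget_start <= INR N' ->
  let X := budget_level N' in
  3 * Rpower X s + 2 * Rpower X (1 + s) / ((1 + s) * th) + 10 * X / th + 15 <= INR N'.
Proof.
 intros HN X. pose proof budget_rate_pos as Hga. pose proof la_lt_1.
 destruct (budget_level_large N' HN) as [Hu HB1]. fold X in HB1.
 assert (Hp : 0 < p) by (unfold p, s; pose proof (Rinv_0_lt_compat t ltac:(lra)); lra).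
 assert (He2 : e2 <= / (1 + t)).
 { unfold e2, Rdiv. rewrite <- (Rmult_1_l (/ (1 + t))) at 2.
   apply Rmult_le_compat_r; [left; apply Rinv_0_lt_compat|]; lra. }
 set (u := ga * INR N') in *.
 set (U := Rpower u (/ (1 + t))).
 assert (HU : 1 <= U) by (apply Rpower_ge_1; [lra|left; apply Rinv_0_lt_compat; lra]).
 assert (F1 : Rpower X s = U)
   by (unfold X, U, budget_level; fold u; rewrite Rpower_mult; f_equal; unfold e2, s; field; lra).
 assert (F2 : Rpower X p = u).
 { unfold X, budget_level; fold u. rewrite Rpower_mult.
   replace (e2 * p) with 1 by (unfold e2, p, s; field; lra). apply Rpower_1; lra. }
 assert (F3 : X <= U) by (unfold X, U, budget_level; fold u; apply Rle_Rpower; lra).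
 assert (F5 : u = U * X).
 { unfold X, U, budget_level; fold u. rewrite <- Rpower_plus.
   replace (/ (1 + t) + e2) with 1 by (unfold e2; field; lra). rewrite Rpower_1; lra. }
 fold p. rewrite F1, F2.
 assert (E1 : 2 * u / (p * th) = la * INR N')
   by (unfold la, u, ga, budget_rate; field; split; lra).
 assert (E2 : 10 * X / th <= 10 * U).
 { apply (Rmult_le_reg_r th); [lra|]. unfold Rdiv. rewrite Rmult_assoc, Rinv_l by lra. nra. }
 assert (E3 : 28 * U <= (1 - la) * INR N').
 { replace (INR N') with (U * X / ga) by (rewrite <- F5; unfold u; field; lra).
   assert (28 * ga <= (1 - la) * X).
   { replace (28 * ga) with ((1 - la) * (28 * ga / (1 - la))) by (field; lra).
     apply Rmult_le_compat_l; lra. }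
   apply (Rmult_le_reg_r ga); auto. unfold Rdiv.
   replace ((1 - la) * (U * X * / ga) * ga) with (U * ((1 - la) * X)) by (field; lra). nra. }
 unfold Rdiv in *. lra.
Qed.

End Budget.

Section DenseGrowth.
Variables (A : nat -> nat -> R) (c a eta t : R).
Hypothesis c_pos : 0 < c.
Hypothesis a_pos : 0 < a.
Hypothesis A_decay : forall m n, Rabs (A m n) <= c * exp (- a * Rabs (INR m - INR n)).
Hypothesis eta_pos : 0 < eta.
Hypothesis eta_lt_a : eta < a.
Hypothesis t_range : 0 < t <= 1.

Let th := level_step a eta.
Let D := 2 * ((c * exp_dist_const a) ^ 2 + (c * exp_dist_const (margin_rate a eta)) ^ 2).

Lemma bestN_apply_dense_exp_le (v : nat -> R) B0 N' : in_AG eta t v ->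
  (forall X, 0 < X -> sqrt (Rpower X (/ t) + 5) * exp (- ((1 - budget_shrink t th) * eta) * X) <= B0) ->
  budget_start t th <= INR N' ->
  real (bestN (apply_mat A v) N') * exp (zeta t * eta * npow N' (t / (1 + t)))
    <= sqrt D * B0 * real (AG_norm eta t v).
Proof.
 intros Hv HB0 HN. set (M := real (AG_norm eta t v)).
 pose proof (AG_norm_nonneg eta t v Hv) as HM. fold M in HM.
 destruct (Req_dec M 0) as [HM0|HM0].
 { assert (Hz := bestN_apply_le A c a c_pos a_pos A_decay v M N'
     (ex_series_sq_AG eta t v Hv) (Series_sq_le_AG_norm eta t v Hv) HM).
   pose proof (proj1 (proj2 (bestN_spec (apply_mat A v) N'))).
   rewrite HM0, Rmult_0_r in Hz. rewrite HM0, Rmult_0_r.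
   replace (real (bestN (apply_mat A v) N')) with 0 by lra. lra. }
 pose proof (level_step_gt_1 a eta eta_pos eta_lt_a) as Hth.
 pose proof (budget_start_pos t th t_range Hth) as Hstart.
 assert (HN0 : (0 < N')%nat) by (apply INR_lt; simpl; lra).
 assert (Hexp := zeta_npow_eq_budget t th t_range Hth N' HN0).
 assert (Hbudget := budget_level_cost t th t_range Hth N' HN). cbv zeta in Hbudget.
 set (X := budget_level t th N') in *.
 assert (HX : 0 < X) by apply budget_level_pos.
 assert (Hcore := bestN_apply_dense A c a eta t v c_pos a_pos A_decay eta_pos eta_lt_a t_range Hv
                    X N' HX ltac:(fold M; lra) Hbudget).
 fold M D in Hcore. rewrite sqrt_mult_alt in Hcore
   by (unfold D; pose proof (pow2_ge_0 (c * exp_dist_const a));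
       pose proof (pow2_ge_0 (c * exp_dist_const (margin_rate a eta))); lra).
 replace (zeta t * eta * npow N' (t / (1 + t))) with (eta * budget_shrink t th * X)
   by (rewrite Rmult_assoc, <- Hexp; ring).
 eapply Rle_trans; [apply Rmult_le_compat_r; [left; apply exp_pos|exact Hcore]|].
 replace (sqrt D * sqrt (Rpower X (/ t) + 5) * (M * exp (- eta * X)) * exp (eta * budget_shrink t th * X))
   with (sqrt D * M * (sqrt (Rpower X (/ t) + 5) * exp (- ((1 - budget_shrink t th) * eta) * X)))
   by (replace (- ((1 - budget_shrink t th) * eta) * X)
         with (- eta * X + eta * budget_shrink t th * X) by ring; rewrite exp_plus; ring).
 replace (sqrt D * B0 * M) with (sqrt D * M * B0) by ring.
 apply Rmult_le_compat_l; [apply Rmult_le_pos; [apply sqrt_pos|lra]|]. apply HB0; auto.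
Qed.

Lemma bestN_apply_exp_le_few (v : nat -> R) N0 N' : in_AG eta t v -> (N' < N0)%nat ->
  real (bestN (apply_mat A v) N') * exp (zeta t * eta * npow N' (t / (1 + t)))
    <= sqrt 2 * (c * exp_dist_const a) * exp (zeta t * eta * INR N0) * real (AG_norm eta t v).
Proof.
 intros Hv HN. pose proof (AG_norm_nonneg eta t v Hv) as HM.
 replace (sqrt 2 * (c * exp_dist_const a) * exp (zeta t * eta * INR N0) * real (AG_norm eta t v))
   with (sqrt 2 * (c * exp_dist_const a) * real (AG_norm eta t v) * exp (zeta t * eta * INR N0))
   by ring.
 pose proof (proj1 (proj2 (bestN_spec (apply_mat A v) N'))).
 apply Rmult_le_compat; auto; [left; apply exp_pos| |].
 - exact (bestN_apply_le A c a c_pos a_pos A_decay v _ N'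
            (ex_series_sq_AG eta t v Hv) (Series_sq_le_AG_norm eta t v Hv) HM).
 - apply exp_le_compat, Rmult_le_compat_l; [apply Rmult_le_pos; [left; apply Rpower_gt_0|lra]|].
   eapply Rle_trans; [apply npow_le_INR|apply le_INR; lia].
   split; [apply Rdiv_le_0_compat; lra|].
   apply (Rmult_le_reg_r (1 + t)); [lra|]. unfold Rdiv. rewrite Rmult_assoc, Rinv_l; lra.
Qed.

Lemma AG_apply_dense :
  exists C : R, forall v : nat -> R, in_AG eta t v ->
    in_AG (zeta t * eta) (t / (1 + t)) (apply_mat A v) /\
    real (AG_norm (zeta t * eta) (t / (1 + t)) (apply_mat A v)) <= C * real (AG_norm eta t v).
Proof.
 pose proof (level_step_gt_1 a eta eta_pos eta_lt_a) as Hth.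
 assert (Hkap := budget_shrink_lt_1 t th t_range Hth).
 destruct (sqrt_rpow_exp_bounded (/ t) ((1 - budget_shrink t th) * eta)) as [B0 [HB0 HB0b]];
   [apply Rinv_0_lt_compat; lra|apply Rmult_lt_0_compat; lra|].
 destruct (nat_between (budget_start t th)) as [N0 [HN0 _]].
 { left. apply budget_start_pos; auto. }
 set (C1 := sqrt 2 * (c * exp_dist_const a) * exp (zeta t * eta * INR N0)).
 assert (HC1 : 0 <= C1).
 { apply Rmult_le_pos; [apply Rmult_le_pos; [apply sqrt_pos|]|left; apply exp_pos].
   pose proof (exp_dist_const_pos a a_pos). nra. }
 exists (C1 + sqrt D * B0). intros v Hv.
 pose proof (AG_norm_nonneg eta t v Hv) as HM.
 enough (Hbound : forall N', real (bestN (apply_mat A v) N') *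
     exp (zeta t * eta * npow N' (t / (1 + t))) <= (C1 + sqrt D * B0) * real (AG_norm eta t v)).
 { destruct (AG_norm_le _ _ _ _ Hbound). repeat split; auto.
   exact (ex_series_sq_apply A c a c_pos a_pos A_decay v (ex_series_sq_AG eta t v Hv)). }
 intro N'. rewrite Rmult_plus_distr_r.
 assert (0 <= sqrt D * B0 * real (AG_norm eta t v))
   by (apply Rmult_le_pos; auto; apply Rmult_le_pos; auto; apply sqrt_pos).
 assert (0 <= C1 * real (AG_norm eta t v)) by (apply Rmult_le_pos; auto).
 destruct (Nat.lt_ge_cases N' N0) as [HN|HN].
 - pose proof (bestN_apply_exp_le_few v N0 N' Hv HN). fold C1 in H1. lra.
 - apply le_INR in HN. pose proof (bestN_apply_dense_exp_le v B0 N' Hv HB0b ltac:(lra)). lra.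
Qed.

End DenseGrowth.

Theorem mainTheorem6 :
  forall (nu sigma : R -> R) (nu_lo nu_hi sigma_hi : R),
    smooth nu -> smooth sigma ->
    0 < nu_lo ->
    (forall x, -1 <= x <= 1 -> nu_lo <= nu x <= nu_hi) ->
    (forall x, -1 <= x <= 1 -> 0 <= sigma x <= sigma_hi) ->
  forall etaL : R, 0 < etaL -> in_De etaL (stiff nu sigma) ->
  forall eta t : R, 0 < eta -> 0 < t <= 1 ->
    (* case (a): banded *)
    (forall p : nat, banded p (stiff nu sigma) ->
       exists C : R, forall v : nat -> R, in_AG eta t v ->
         in_AG (eta / Rpower (2 * INR p + 1) t) t (apply_mat (stiff nu sigma) v) /\
         real (AG_norm (eta / Rpower (2 * INR p + 1) t) t (apply_mat (stiff nu sigma) v))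
           <= C * real (AG_norm eta t v))
    /\
    (* case (b): dense, eta < etaL *)
    (eta < etaL ->
       exists C : R, forall v : nat -> R, in_AG eta t v ->
         in_AG (zeta t * eta) (t / (1 + t)) (apply_mat (stiff nu sigma) v) /\
         real (AG_norm (zeta t * eta) (t / (1 + t)) (apply_mat (stiff nu sigma) v))
           <= C * real (AG_norm eta t v)).
Proof.
 intros nu sigma nu_lo nu_hi sigma_hi _ _ _ _ _ etaL HetaL [cL [HcL Hdecay]] eta t Heta Ht.
 split.
 - intros p Hband. exact (AG_apply_banded _ cL etaL p HcL HetaL Hdecay Hband eta t Heta Ht).
 - intros Hlt. exact (AG_apply_dense _ cL etaL eta t HcL HetaL Hdecay Heta Hlt Ht).
Qed.
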